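(* Let $\beta$ be a well-formed execution of the SODA algorithm described in the context, and let $\Pi$ be the set of operations of $\beta$ to which a tag is associated as follows: for a write $\pi$, $(tag(\pi),value(\pi))=(t_w,v)$ is the pair it disseminates in its put phase; for a completed read $\pi$, $(tag(\pi),value(\pi))=(t_{read},v)$ where $v$ is the returned value and $t_{read}$ is the tag of the $k$ coded elements it decoded. Define $\pi\prec\phi$ iff $tag(\pi)<tag(\phi)$, or $tag(\pi)=tag(\phi)$ with $\pi$ a write and $\phi$ a read. Then $\prec$ satisfies: (P1) there are no operations $\pi_1,\pi_2$ such that $\pi_1$ completes before $\pi_2$ is invoked and yet $\pi_2\prec\pi_1$; (P2) if $\pi_1$ is a write and $\pi_2$ is any other operation, then $\pi_1\prec\pi_2$ or $\pi_2\prec\pi_1$; (P3) every read returns the value of the last write preceding it with respect to $\prec$, and returns the initial value $v_0$ if no write precedes it.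
   Context: System model: asynchronous message passing with writers $\mathcal{W}$, readers $\mathcal{R}$ and $n$ servers $\mathcal{S}$ ordered $s_1<\dots<s_n$; reliable point-to-point channels between every client and server and every two servers (message eventually delivered if destination does not crash, even if the sender crashes; arbitrary delays and order). Processes fail by crashing only; any number of clients and at most $f$ servers crash, $1\le f\le (n-1)/2$. Well-formed: each client invokes an operation only after its previous one completed. An operation precedes another if its response occurs before the other's invocation. Coding: values in a set $V$ with initial value $v_0$; an $[n,k]$ MDS code with $k=n-f$, encoder $\Phi$ ($\Phi_s(v)$ = coded element for server $s$) and decoder $\Phi^{-1}$ recovering $v$ from any $k$ coded elements of $v$ (with known server indices). Tags: pairs $t=(z,w)$, $z\in\mathbb{N}$, $w\in\mathcal{W}$, with $t_2>t_1$ iff $t_2.z>t_1.z$, or $t_2.z=t_1.z$ and $t_2.w>t_1.w$; $t_0$ is the initial tag (smaller than all others). Dissemination primitives. md-value-send$(t,v)$ by a writer: $(t,v)$ is sent to servers $s_1,\dots,s_{f+1}$; each such $s_i$, on first receipt, forwards $(t,v)$ to $s_{i+1},\dots,s_{f+1}$, sends $(t,\Phi_{s'}(v))$ to every other server $s'$, and then delivers $(t,\Phi_{s_i}(v))$ locally; each other server delivers the coded element $(t,\Phi_{s}(v))$ it receives (''md-value-deliver''). md-meta-send$(m)$: identical, except every server delivers the metadata message $m$ itself (''md-meta-deliver''). Each server delivers each disseminated message once. SODA writer $w$, write$(v)$: (get-tag) send a tag query to all servers, wait for responses (their locally stored tags) from a majority, let $t_{max}$ be the highest; (put) set $t_w=(t_{max}.z+1,w)$,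 invoke md-value-send$(t_w,v)$, wait for acknowledgments from $k$ servers, terminate. SODA reader $r$, read: (get-tag) query all servers for their tags, wait for a majority, let $t_r$ be the highest; (get-data) invoke md-meta-send(READ-VALUE,$(r,t_r)$), and collect received pairs $(t,c)$ until $k$ of them, from distinct servers, carry the same tag $t_{read}$; decode $v=\Phi^{-1}$ of these $k$ coded elements; (complete) invoke md-meta-send(READ-COMPLETE,$(r,t_r)$) and return $v$. (Each read carries a unique identifier in addition to $r$.) SODA server $s$: state: a pair $(t,c_s)$, initially $(t_0,\Phi_s(v_0))$; a set $R_c$ of registered pairs $(r,t_r)$, initially empty; a set $H$ of triples $(t,s',r)$, initially empty. On a tag query from a writer or reader: reply with local $t$. On md-value-deliver$(t_w,c'_s)$: for each $(r,t_r)\in R_c$ with $t_w\ge t_r$: send $(t_w,c'_s)$ to $r$, add $(t_w,s,r)$ to $H$, invoke md-meta-send(READ-DISPERSE,$(t_w,s,r)$); then if $t_w>t$ set $(t,c_s)\gets(t_w,c'_s)$; send an acknowledgment to the writer. On md-meta-deliver(READ-VALUE,$(r,t_r)$): if $(t_0,s,r)\in H$, remove from $H$ all triples with reader $r$; else add $(r,t_r)$ to $R_c$ and, if $t\ge t_r$, send $(t,c_s)$ to $r$, add $(t,s,r)$ to $H$ and invoke md-meta-send(READ-DISPERSE,$(t,s,r)$). On md-meta-deliver(READ-COMPLETE,$(r,t_r)$): if some $(r,t'_r)\in R_c$, remove it and remove all triples with reader $r$ from $H$; else add $(t_0,s,r)$ to $H$. On md-meta-deliver(READ-DISPERSE,$(t,s',r)$):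 add $(t,s',r)$ to $H$; if some $(r,t_r)\in R_c$ and the number of triples in $H$ with tag $t$ and reader $r$ is at least $k$, remove $(r,t_r)$ from $R_c$ and remove all triples with reader $r$ from $H$. *)

From HB Require Import structures.
From mathcomp Require Import all_boot.
From Stdlib Require List.

Set Implicit Arguments.
Unset Strict Implicit.
Unset Printing Implicit Defensive.

(* Tags t = (z, w), lexicographically ordered; t0 = (0,0) is smaller   *)
(* than every tag ever created (writers create tags with z >= 1).      *)
Definition tag := (nat * nat)%type.
Definition t0 : tag := (0, 0).
Definition tag_lt (a b : tag) : bool :=
  (a.1 < b.1) || ((a.1 == b.1) && (a.2 < b.2)).
Definition tag_le (a b : tag) : bool := (a == b) || tag_lt a b.
Definition tag_max (a b : tag) : tag := if tag_lt a b then b else a.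

(* Operation identifiers: (client id, sequence number of the operation
   at that client).  A read identifier is the unique read identifier. *)
Definition wid := (nat * nat)%type.
Definition rid := (nat * nat)%type.

Inductive op := OpW of wid | OpR of rid.

Inductive proc := Writer of nat | Reader of nat | Server of nat.
(* servers s_1 < ... < s_n are Server 0, ..., Server (n-1) *)

Definition client_of (o : op) : proc :=
  match o with OpW w => Writer w.1 | OpR r => Reader r.1 end.

Inductive meta :=
| ReadValue of rid & tag
| ReadComplete of rid & tag
| ReadDisperse of tag & nat & rid.

Definition meta_enc (m : meta) : nat * (tag * nat * rid) :=
  match m with
  | ReadValue r t => (0, (t, 0, r))
  | ReadComplete r t => (1, (t, 0, r))
  | ReadDisperse t s r => (2, (t, s, r))
  end.
Definition meta_dec (x : nat * (tag * nat * rid)) : meta :=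
  match x.1 with
  | 0 => ReadValue x.2.2 x.2.1.1
  | 1 => ReadComplete x.2.2 x.2.1.1
  | _ => ReadDisperse x.2.1.1 x.2.1.2 x.2.2
  end.
Lemma meta_encK : cancel meta_enc meta_dec. Proof. by case. Qed.
HB.instance Definition _ := Equality.copy meta (can_type meta_encK).

Definition sadd (T : eqType) (x : T) (l : seq T) : seq T :=
  if x \in l then l else rcons l x.

Definition upd (T : Type) (g : nat -> T) (i : nat) (x : T) : nat -> T :=
  fun j => if j == i then x else g j.

Section Soda.
Variables (V C : Type).

Inductive payload :=
| PTagQuery of op                  (* client -> server *)
| PTagResp of op & tag             (* server -> client *)
| PValFull of wid & tag & V
| PValCoded of wid & tag & C
| PAck of wid                      (* server -> writer *)
| PMeta of meta
| PCoded of rid & tag & C.         (* server -> reader: pair (t,c) *)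

(* external/observable actions of the execution; every other step is LTau *)
Inductive label :=
| LInvW of wid & V
| LPut of wid & tag & V       (* put phase starts: disseminates (t_w, v) *)
| LRespW of wid
| LInvR of rid
| LRespR of rid & V & tag     (* read returns v; t = t_read (tag decoded) *)
| LTau.

Record sstate := SState {
  s_tag : tag; s_c : C;
  s_Rc : seq (rid * tag);
  s_H : seq (tag * nat * rid);
  s_dval : seq wid;      (* value disseminations already delivered *)
  s_dmeta : seq meta;    (* meta disseminations already delivered *)
  s_crashed : bool;
  s_out : seq (proc * payload) }.  (* messages not yet sent, in order *)

Inductive wphase :=
| WIdle
| WGet of wid & V & seq (nat * tag)   (* tag responses from distinct servers *)
| WPut of wid & tag & seq nat.        (* acks from distinct servers *)

Record wstate := WState {
  w_cnt : nat; w_ph : wphase; w_crashed : bool; w_out : seq (proc * payload) }.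

Inductive rphase :=
| RIdle
| RGet of rid & seq (nat * tag)
| RData of rid & tag & seq (nat * tag * C).

Record rstate := RState {
  r_cnt : nat; r_ph : rphase; r_crashed : bool; r_out : seq (proc * payload) }.

Record gstate := GState {
  g_srv : nat -> sstate;
  g_w : nat -> wstate;
  g_r : nat -> rstate;
  g_net : seq (proc * proc * payload) }.  (* (source, destination, payload) *)

Variables (n f : nat) (v0 : V) (Phi : nat -> V -> C)
          (Phiinv : seq (nat * C) -> V).

Definition k := n - f.

Definition s_add_out (l : seq (proc * payload)) (st : sstate) :=
  SState (s_tag st) (s_c st) (s_Rc st) (s_H st) (s_dval st) (s_dmeta st)
         (s_crashed st) (s_out st ++ l).
Definition s_set_RcH Rc H (st : sstate) :=
  SState (s_tag st) (s_c st) Rc H (s_dval st) (s_dmeta st) (s_crashed st) (s_out st).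
Definition s_add_dval w (st : sstate) :=
  SState (s_tag st) (s_c st) (s_Rc st) (s_H st) (w :: s_dval st) (s_dmeta st)
         (s_crashed st) (s_out st).
Definition s_add_dmeta m (st : sstate) :=
  SState (s_tag st) (s_c st) (s_Rc st) (s_H st) (s_dval st) (m :: s_dmeta st)
         (s_crashed st) (s_out st).
Definition s_crash (st : sstate) :=
  SState (s_tag st) (s_c st) (s_Rc st) (s_H st) (s_dval st) (s_dmeta st)
         true (s_out st).
Definition s_set_out l (st : sstate) :=
  SState (s_tag st) (s_c st) (s_Rc st) (s_H st) (s_dval st) (s_dmeta st)
         (s_crashed st) l.

Definition to_servers (lo cnt : nat) (p : payload) : seq (proc * payload) :=
  [seq (Server i, p) | i <- iota lo cnt].

Definition md_value_send w t v := to_servers 0 f.+1 (PValFull w t v).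
Definition md_meta_send m := to_servers 0 f.+1 (PMeta m).

(* what server s (index s, i.e. s_{s+1}) sends on first receipt of a full
   value message, before delivering locally: forward to s_{i+1..f+1} and
   coded elements to every server outside s_1..s_{f+1}. *)
Definition fwd_value (s : nat) w t (v : V) : seq (proc * payload) :=
  if s <= f then
    to_servers s.+1 (f - s) (PValFull w t v) ++
    [seq (Server i, PValCoded w t (Phi i v)) | i <- iota f.+1 (n - f.+1)]
  else [::].
Definition fwd_meta (s : nat) m : seq (proc * payload) :=
  if s <= f then to_servers s.+1 (f - s) (PMeta m) ++ to_servers f.+1 (n - f.+1) (PMeta m)
  else [::].

(* md-value-deliver(t_w, c') at server s; L enumerates (in some order) the
   registered pairs (r,t_r) in R_c with t_w >= t_r. *)
Definition srv_value_deliver (s : nat) (w : wid) (tw : tag) (c' : C)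
    (L : seq (rid * tag)) (st : sstate) : sstate :=
  let sends := flatten [seq (Reader x.1.1, PCoded x.1 tw c')
                              :: md_meta_send (ReadDisperse tw s x.1) | x <- L] in
  let H' := foldl (fun H x => sadd (tw, s, x.1) H) (s_H st) L in
  let b := tag_lt (s_tag st) tw in
  SState (if b then tw else s_tag st) (if b then c' else s_c st)
         (s_Rc st) H' (s_dval st) (s_dmeta st) (s_crashed st)
         (s_out st ++ sends ++ [:: (Writer w.1, PAck w)]).

Definition srv_meta_deliver (s : nat) (m : meta) (st : sstate) : sstate :=
  match m with
  | ReadValue r tr =>
      if (t0, s, r) \in s_H st then
        s_set_RcH (s_Rc st) [seq x <- s_H st | x.2 != r] st
      else
        let Rc' := sadd (r, tr) (s_Rc st) in
        if tag_le tr (s_tag st) then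
          s_add_out ((Reader r.1, PCoded r (s_tag st) (s_c st))
                       :: md_meta_send (ReadDisperse (s_tag st) s r))
            (s_set_RcH Rc' (sadd (s_tag st, s, r) (s_H st)) st)
        else s_set_RcH Rc' (s_H st) st
  | ReadComplete r tr =>
      if has (fun x => x.1 == r) (s_Rc st) then
        s_set_RcH [seq x <- s_Rc st | x.1 != r] [seq x <- s_H st | x.2 != r] st
      else s_set_RcH (s_Rc st) (sadd (t0, s, r) (s_H st)) st
  | ReadDisperse t s' r =>
      let H' := sadd (t, s', r) (s_H st) in
      if has (fun x => x.1 == r) (s_Rc st)
         && (k <= count (fun x => (x.1.1 == t) && (x.2 == r)) H') then
        s_set_RcH [seq x <- s_Rc st | x.1 != r] [seq x <- H' | x.2 != r] st
      else s_set_RcH (s_Rc st) H' st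
  end.

Inductive srv_recv (s : nat) : payload -> sstate -> sstate -> Prop :=
| SR_query o st :
    srv_recv s (PTagQuery o) st (s_add_out [:: (client_of o, PTagResp o (s_tag st))] st)
| SR_full_dup w t v st : w \in s_dval st -> srv_recv s (PValFull w t v) st st
| SR_full w t v L st :
    w \notin s_dval st ->
    perm_eq L [seq x <- s_Rc st | tag_le x.2 t] ->
    srv_recv s (PValFull w t v) st
      (srv_value_deliver s w t (Phi s v) L (s_add_dval w (s_add_out (fwd_value s w t v) st)))
| SR_coded_dup w t c st : w \in s_dval st -> srv_recv s (PValCoded w t c) st st
| SR_coded w t c L st :
    w \notin s_dval st ->
    perm_eq L [seq x <- s_Rc st | tag_le x.2 t] ->
    srv_recv s (PValCoded w t c) st (srv_value_deliver s w t c L (s_add_dval w st))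
| SR_meta_dup m st : m \in s_dmeta st -> srv_recv s (PMeta m) st st
| SR_meta m st :
    m \notin s_dmeta st ->
    srv_recv s (PMeta m) st (srv_meta_deliver s m (s_add_dmeta m (s_add_out (fwd_meta s m) st))).

Definition majority (l : seq (nat * tag)) := n < 2 * size l.
Definition max_tag (l : seq (nat * tag)) : tag := foldl tag_max t0 (map snd l).
Definition add_resp (s : nat) (t : tag) (l : seq (nat * tag)) :=
  if s \in map fst l then l else rcons l (s, t).

Definition w_set (cnt : nat) ph (out : seq (proc * payload)) (st : wstate) :=
  WState cnt ph (w_crashed st) out.

Inductive w_recv (wi : nat) (s : nat) : payload -> wstate -> label -> wstate -> Prop :=
| WR_resp_wait w v resp t st :
    w_ph st = WGet w v resp -> ~~ majority (add_resp s t resp) ->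
    w_recv wi s (PTagResp (OpW w) t) st LTau
      (w_set (w_cnt st) (WGet w v (add_resp s t resp)) (w_out st) st)
| WR_resp_put w v resp t st :
    w_ph st = WGet w v resp -> majority (add_resp s t resp) ->
    let tw := ((max_tag (add_resp s t resp)).1.+1, wi) in
    w_recv wi s (PTagResp (OpW w) t) st (LPut w tw v)
      (w_set (w_cnt st) (WPut w tw [::]) (w_out st ++ md_value_send w tw v) st)
| WR_resp_ignore o t st :
    (forall w v resp, w_ph st = WGet w v resp -> o <> OpW w) ->
    w_recv wi s (PTagResp o t) st LTau st
| WR_ack_wait w t acks st :
    w_ph st = WPut w t acks -> size (sadd s acks) < k ->
    w_recv wi s (PAck w) st LTau (w_set (w_cnt st) (WPut w t (sadd s acks)) (w_out st) st)
| WR_ack_done w t acks st :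
    w_ph st = WPut w t acks -> k <= size (sadd s acks) ->
    w_recv wi s (PAck w) st (LRespW w) (w_set (w_cnt st) WIdle (w_out st) st)
| WR_ack_ignore w st :
    (forall w' t acks, w_ph st = WPut w' t acks -> w <> w') ->
    w_recv wi s (PAck w) st LTau st.

Definition r_set (cnt : nat) ph (out : seq (proc * payload)) (st : rstate) :=
  RState cnt ph (r_crashed st) out.

Definition decodable (t : tag) (recv : seq (nat * tag * C)) (L : seq (nat * C)) :=
  size L = k /\ uniq (map fst L) /\
  forall x, List.In x L -> List.In (x.1, t, x.2) recv.

Inductive r_recv (s : nat) : payload -> rstate -> label -> rstate -> Prop :=
| RR_resp_wait r resp t st :
    r_ph st = RGet r resp -> ~~ majority (add_resp s t resp) ->
    r_recv s (PTagResp (OpR r) t) st LTau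
      (r_set (r_cnt st) (RGet r (add_resp s t resp)) (r_out st) st)
| RR_resp_data r resp t st :
    r_ph st = RGet r resp -> majority (add_resp s t resp) ->
    let tr := max_tag (add_resp s t resp) in
    r_recv s (PTagResp (OpR r) t) st LTau
      (r_set (r_cnt st) (RData r tr [::]) (r_out st ++ md_meta_send (ReadValue r tr)) st)
| RR_resp_ignore o t st :
    (forall r resp, r_ph st = RGet r resp -> o <> OpR r) ->
    r_recv s (PTagResp o t) st LTau st
| RR_data_wait r tr recv t c st :
    r_ph st = RData r tr recv ->
    ~ (exists t' L, decodable t' (rcons recv (s, t, c)) L) ->
    r_recv s (PCoded r t c) st LTau
      (r_set (r_cnt st) (RData r tr (rcons recv (s, t, c))) (r_out st) st)
| RR_data_done r tr recv t c st t' L :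
    r_ph st = RData r tr recv ->
    decodable t' (rcons recv (s, t, c)) L ->
    r_recv s (PCoded r t c) st (LRespR r (Phiinv L) t')
      (r_set (r_cnt st) RIdle (r_out st ++ md_meta_send (ReadComplete r tr)) st)
| RR_data_ignore r t c st :
    (forall r' tr recv, r_ph st = RData r' tr recv -> r <> r') ->
    r_recv s (PCoded r t c) st LTau st.

Definition g_set_srv (g : gstate) i x := GState (upd (g_srv g) i x) (g_w g) (g_r g) (g_net g).
Definition g_set_w (g : gstate) i x := GState (g_srv g) (upd (g_w g) i x) (g_r g) (g_net g).
Definition g_set_r (g : gstate) i x := GState (g_srv g) (g_w g) (upd (g_r g) i x) (g_net g).
Definition g_set_net (g : gstate) net := GState (g_srv g) (g_w g) (g_r g) net.

Definition n_crashed (g : gstate) := count (fun i => s_crashed (g_srv g i)) (iota 0 n).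

Inductive step : gstate -> label -> gstate -> Prop :=
(* invocations (only when the client is idle: well-formedness) *)
| St_inv_write g wi v :
    ~~ w_crashed (g_w g wi) -> w_ph (g_w g wi) = WIdle ->
    let w := (wi, w_cnt (g_w g wi)) in
    step g (LInvW w v)
      (g_set_w g wi (w_set (w_cnt (g_w g wi)).+1 (WGet w v [::])
                      (w_out (g_w g wi) ++ to_servers 0 n (PTagQuery (OpW w))) (g_w g wi)))
| St_inv_read g ri :
    ~~ r_crashed (g_r g ri) -> r_ph (g_r g ri) = RIdle ->
    let r := (ri, r_cnt (g_r g ri)) in
    step g (LInvR r)
      (g_set_r g ri (r_set (r_cnt (g_r g ri)).+1 (RGet r [::])
                      (r_out (g_r g ri) ++ to_servers 0 n (PTagQuery (OpR r))) (g_r g ri)))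
| St_send_srv g s dst p rest :
    ~~ s_crashed (g_srv g s) -> s_out (g_srv g s) = (dst, p) :: rest ->
    step g LTau (g_set_net (g_set_srv g s (s_set_out rest (g_srv g s)))
                           (rcons (g_net g) (Server s, dst, p)))
| St_send_w g wi dst p rest :
    ~~ w_crashed (g_w g wi) -> w_out (g_w g wi) = (dst, p) :: rest ->
    step g LTau (g_set_net (g_set_w g wi (w_set (w_cnt (g_w g wi)) (w_ph (g_w g wi)) rest (g_w g wi)))
                           (rcons (g_net g) (Writer wi, dst, p)))
| St_send_r g ri dst p rest :
    ~~ r_crashed (g_r g ri) -> r_out (g_r g ri) = (dst, p) :: rest ->
    step g LTau (g_set_net (g_set_r g ri (r_set (r_cnt (g_r g ri)) (r_ph (g_r g ri)) rest (g_r g ri)))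
                           (rcons (g_net g) (Reader ri, dst, p)))
(* delivery of an arbitrary in-transit message (arbitrary delay/order) *)
| St_recv_srv g n1 n2 src s p st' :
    g_net g = n1 ++ (src, Server s, p) :: n2 -> ~~ s_crashed (g_srv g s) ->
    srv_recv s p (g_srv g s) st' ->
    step g LTau (g_set_net (g_set_srv g s st') (n1 ++ n2))
| St_recv_w g n1 n2 s wi p l st' :
    g_net g = n1 ++ (Server s, Writer wi, p) :: n2 -> ~~ w_crashed (g_w g wi) ->
    w_recv wi s p (g_w g wi) l st' ->
    step g l (g_set_net (g_set_w g wi st') (n1 ++ n2))
| St_recv_r g n1 n2 s ri p l st' :
    g_net g = n1 ++ (Server s, Reader ri, p) :: n2 -> ~~ r_crashed (g_r g ri) ->
    r_recv s p (g_r g ri) l st' ->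
    step g l (g_set_net (g_set_r g ri st') (n1 ++ n2))
| St_crash_srv g s :
    s < n -> ~~ s_crashed (g_srv g s) -> n_crashed g < f ->
    step g LTau (g_set_srv g s (s_crash (g_srv g s)))
| St_crash_w g wi :
    step g LTau (g_set_w g wi (WState (w_cnt (g_w g wi)) (w_ph (g_w g wi)) true (w_out (g_w g wi))))
| St_crash_r g ri :
    step g LTau (g_set_r g ri (RState (r_cnt (g_r g ri)) (r_ph (g_r g ri)) true (r_out (g_r g ri)))).

Definition init : gstate :=
  GState (fun s => SState t0 (Phi s v0) [::] [::] [::] [::] false [::])
         (fun _ => WState 0 WIdle false [::])
         (fun _ => RState 0 RIdle false [::])
         [::].

Inductive reachable : seq label -> gstate -> Prop :=
| Reach0 : reachable [::] init
| ReachS tr g l g' : reachable tr g -> step g l g' -> reachable (rcons tr l) g'.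

(* o is in Pi with (tag(o), value(o)) = (t, v) *)
Definition tagged (tr : seq label) (o : op) (t : tag) (v : V) : Prop :=
  match o with
  | OpW w => List.In (LPut w t v) tr
  | OpR r => List.In (LRespR r v t) tr
  end.

Definition is_write (o : op) := if o is OpW _ then true else false.
Definition is_read (o : op) := if o is OpR _ then true else false.

Definition prec (o1 : op) (t1 : tag) (o2 : op) (t2 : tag) : Prop :=
  tag_lt t1 t2 \/ (t1 = t2 /\ is_write o1 /\ is_read o2).

Definition is_inv (o : op) (l : label) : Prop :=
  match o, l with
  | OpW w, LInvW w' _ => w = w'
  | OpR r, LInvR r' => r = r'
  | _, _ => False
  end.
Definition is_resp (o : op) (l : label) : Prop :=
  match o, l with
  | OpW w, LRespW w' => w = w'
  | OpR r, LRespR r' _ _ => r = r'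
  | _, _ => False
  end.

Definition completes_before (tr : seq label) (o1 o2 : op) : Prop :=
  exists i j l1 l2, i < j /\ List.nth_error tr i = Some l1 /\ is_resp o1 l1 /\
                    List.nth_error tr j = Some l2 /\ is_inv o2 l2.

Definition P1 (tr : seq label) : Prop :=
  forall o1 t1 v1 o2 t2 v2, tagged tr o1 t1 v1 -> tagged tr o2 t2 v2 ->
    completes_before tr o1 o2 -> ~ prec o2 t2 o1 t1.

Definition P2 (tr : seq label) : Prop :=
  forall o1 t1 v1 o2 t2 v2, tagged tr o1 t1 v1 -> tagged tr o2 t2 v2 ->
    is_write o1 -> o1 <> o2 -> prec o1 t1 o2 t2 \/ prec o2 t2 o1 t1.

Definition P3 (tr : seq label) : Prop :=
  forall r t v, tagged tr (OpR r) t v ->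
    ((~ exists w tw vw, tagged tr (OpW w) tw vw /\ prec (OpW w) tw (OpR r) t) -> v = v0) /\
    ((exists w tw vw, tagged tr (OpW w) tw vw /\ prec (OpW w) tw (OpR r) t) ->
     exists w tw vw, tagged tr (OpW w) tw vw /\ prec (OpW w) tw (OpR r) t /\ v = vw /\
       forall w' tw' vw', tagged tr (OpW w') tw' vw' -> prec (OpW w') tw' (OpR r) t ->
         w' = w \/ prec (OpW w') tw' (OpW w) tw).

End Soda.

Definition mds_decodes (V C : Type) (n k : nat) (Phi : nat -> V -> C)
    (Phiinv : seq (nat * C) -> V) : Prop :=
  forall (v : V) (L : seq nat), uniq L -> size L = k -> all (fun i => i < n) L ->
    Phiinv [seq (i, Phi i v) | i <- L] = v.

(* Every completed operation leaves its tag at a quorum: a write completes once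
   k = n - f servers acknowledged holding a tag at least t_w, and a read decodes k
   coded elements from servers whose stored tag is at least t_read.  The tag query
   of a later operation is answered by a majority, which meets every set of k
   servers because 2f < n.  Hence a later write chooses a strictly larger tag, and
   a later read registers a tag t_r at least as large and accepts only coded
   elements tagged at least t_r; this is P1.  Write tags are pairwise distinct
   (they carry the writer and grow along each writer's puts), which gives P2.
   Every coded element a server holds encodes v0 under t0 or the value put with
   its tag, so by the MDS property a read returns the value of the write whose tag
   it decoded, which gives P3.  All of this is maintained as an invariant of the
   reachable states, covering the trace, the local states and every message in
   transit or queued in an outbox. *)

From Pilot Require Import Defs.
From mathcomp Require Import all_boot.
From mathcomp Require Import zify.
From Stdlib Require List.

Set Implicit Arguments.
Unset Strict Implicit.
Unset Printing Implicit Defensive.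

Lemma tag_le_refl (a : Defs.tag) : tag_le a a.
Proof. by rewrite /tag_le eqxx. Qed.

Lemma tag_le_trans (a b c : Defs.tag) : tag_le a b -> tag_le b c -> tag_le a c.
Proof. case: a b c => [a1 a2] [b1 b2] [c1 c2]; rewrite /tag_le /tag_lt /= !xpair_eqE. lia. Qed.

Lemma tag_lt_le (a b : Defs.tag) : tag_lt a b -> tag_le a b.
Proof. by rewrite /tag_le => ->; rewrite orbT. Qed.

Lemma tag_le_lt_false (a b : Defs.tag) : tag_le a b -> tag_lt b a -> False.
Proof. case: a b => [a1 a2] [b1 b2]; rewrite /tag_le /tag_lt /= !xpair_eqE. lia. Qed.

Lemma tag_lt_irr (a : Defs.tag) : tag_lt a a = false.
Proof. case: a => [a1 a2]; rewrite /tag_lt /=. lia. Qed.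

Lemma tag_total (a b : Defs.tag) : tag_lt a b \/ a = b \/ tag_lt b a.
Proof.
case: a b => [a1 a2] [b1 b2]; rewrite /tag_lt /=.
case: (ltngtP a1 b1) => H; first by left.
- by right; right.
- case: (ltngtP a2 b2) => H2; [left | right;right | right;left]; rewrite ?H ?H2 //=; lia.
Qed.

Lemma tag_max_le_l (a b : Defs.tag) : tag_le a (tag_max a b).
Proof. rewrite /tag_max; case: ifP => H; [exact: tag_lt_le | exact: tag_le_refl]. Qed.

Lemma tag_max_le_r (a b : Defs.tag) : tag_le b (tag_max a b).
Proof.
rewrite /tag_max; case: ifP => H; first exact: tag_le_refl.
case: (tag_total a b) => [H'|[->|H']]; [by rewrite H' in H | exact: tag_le_refl | exact: tag_lt_le].
Qed.

Lemma foldl_max_ge (l : seq Defs.tag) (a : Defs.tag) : tag_le a (foldl tag_max a l).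
Proof.
elim: l a => [|x l IH] a /=; first exact: tag_le_refl.
exact: tag_le_trans (tag_max_le_l a x) (IH _).
Qed.

Lemma foldl_max_in (l : seq Defs.tag) (a x : Defs.tag) : x \in l -> tag_le x (foldl tag_max a l).
Proof.
elim: l a => [|y l IH] a //=; rewrite inE => /orP [/eqP ->|Hx].
- exact: tag_le_trans (tag_max_le_r a y) (foldl_max_ge _ _).
- exact: IH.
Qed.

Lemma max_tag_in (l : seq (nat * Defs.tag)) s t : (s, t) \in l -> tag_le t (max_tag l).
Proof. move=> H; apply: foldl_max_in; apply/mapP; by exists (s, t). Qed.

Lemma In_rcons (T : Type) (x l : T) tr : List.In x (rcons tr l) <-> List.In x tr \/ x = l.
Proof.
elim: tr => [|y tr IH] /=; first by split; [case=> // ->; right | case=> // ->; left].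
rewrite IH; tauto.
Qed.

Lemma In_rcons_l (T : Type) (tr : seq T) l x : List.In x tr -> List.In x (rcons tr l).
Proof. by rewrite In_rcons; left. Qed.

Lemma decomp_rcons (T : Type) (tr pre post : seq T) (x l : T) :
  rcons tr l = pre ++ x :: post ->
  (pre = tr /\ x = l /\ post = [::]) \/ exists post', post = rcons post' l /\ tr = pre ++ x :: post'.
Proof.
elim/last_ind: post => [|post y _].
- rewrite cats1 => /rcons_inj [-> ->]; by left.
- rewrite -rcons_cons -rcons_cat => /rcons_inj [-> ->].
  right; by exists post.
Qed.

Lemma In_app_l (T : Type) (x : T) a b : List.In x a -> List.In x (a ++ b).
Proof. move=> H; apply: List.in_or_app; by left. Qed.

Lemma In_app_insert (T : Type) (x y : T) n1 n2 : List.In x (n1 ++ n2) -> List.In x (n1 ++ y :: n2).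
Proof.
move=> H; case: (List.in_app_or _ _ _ H) => {}H; apply: List.in_or_app; [by left | right; by right].
Qed.

Lemma nth_error_split (T : Type) (l : seq T) j x :
  List.nth_error l j = Some x -> l = take j l ++ x :: drop j.+1 l.
Proof.
elim: l j => [|y l IH] [|j] //=.
- by move=> [] <-; rewrite drop0.
- by move/IH => {1}->.
Qed.

Lemma nth_error_In_take (T : Type) (l : seq T) i j x :
  i < j -> List.nth_error l i = Some x -> List.In x (take j l).
Proof.
elim: l i j => [|y l IH] [|i] [|j] //=.
- by move=> _ [] ->; left.
- move=> Hij H; right; exact: IH H.
Qed.

Lemma uniq_bounded_meet n (Q R : seq nat) :
  uniq Q -> uniq R -> all (fun s => s < n) Q -> all (fun s => s < n) R ->
  n < size Q + size R -> exists2 s, s \in Q & s \in R.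
Proof.
move=> UQ UR AQ AR Hsize; apply/hasP; apply: contraLR Hsize => disj.
have UQR : uniq (Q ++ R) by rewrite cat_uniq UQ UR has_sym disj.
rewrite -leqNgt -size_cat -(size_iota 0 n); apply: uniq_leq_size => // x.
by rewrite mem_iota /= mem_cat => /orP [/(allP AQ)|/(allP AR)].
Qed.

Lemma In_mem (T : eqType) (x : T) (s : seq T) : List.In x s <-> x \in s.
Proof.
elim: s => [|y s IH] //=; rewrite inE IH; split.
- by case=> [->|->]; rewrite ?eqxx ?orbT.
- by case/orP => [/eqP ->|]; [left | right].
Qed.

Lemma In_flatten_map (A B : Type) (F : A -> seq B) (L : seq A) y :
  List.In y (flatten (map F L)) -> exists x, List.In x L /\ List.In y (F x).
Proof.
elim: L => [|x L IH] //= H; case: (List.in_app_or _ _ _ H) => [{}H|/IH [z [H1 H2]]].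
- by exists x; split => //; left.
- by exists z; split => //; right.
Qed.

Lemma all_In (T : Type) (p : pred T) (L : seq T) : (forall x, List.In x L -> p x) -> all p L.
Proof. elim: L => [|x L IH] //= H; rewrite H ?IH //; [by move=> y Hy; apply: H; right | by left]. Qed.

Lemma mem_map_fst (A : eqType) (B : Type) (L : seq (A * B)) a :
  a \in map fst L -> exists x, List.In x L /\ x.1 = a.
Proof.
elim: L => [|x L IH] //=; rewrite inE => /orP [/eqP ->|/IH [y [H1 H2]]].
- by exists x; split => //; left.
- by exists y; split => //; right.
Qed.

Arguments RGet {C} _ _.
Arguments RIdle {C}.
Arguments WPut {V} _ _ _.
Arguments WIdle {V}.
Arguments PTagQuery {V C} _.
Arguments PTagResp {V C} _ _.
Arguments PAck {V C} _.
Arguments PMeta {V C} _.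
Arguments PValFull {V C} _ _ _.
Arguments PValCoded {V C} _ _ _.
Arguments PCoded {V C} _ _ _.
Arguments LInvR {V} _.
Arguments LRespW {V} _.
Arguments LTau {V}.

(** * The inductive invariant *)

Section SodaInvariant.
Variables (V C : Type) (n f : nat) (v0 : V) (Phi : nat -> V -> C)
          (Phiinv : seq (nat * C) -> V).

Local Notation gst := (gstate V C).
Local Notation lab := (label V).
Local Notation pay := (payload V C).
Local Notation trace := (seq lab).

Definition srv_tag (g : gst) s := s_tag (g_srv g s).

Definition in_transit (g : gst) (src dst : proc) (p : pay) : Prop :=
  List.In (src, dst, p) (g_net g) \/
  match src with
  | Server s => List.In (dst, p) (s_out (g_srv g s))
  | Writer wi => List.In (dst, p) (w_out (g_w g wi))
  | Reader ri => List.In (dst, p) (r_out (g_r g ri))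
  end.

Definition coded_pair_ok (tr : trace) i (t : Defs.tag) (c : C) :=
  (t = t0 /\ c = Phi i v0) \/ exists w v, List.In (LPut w t v) tr /\ c = Phi i v.

Definition op_invoked (g : gst) (o : op) :=
  match o with
  | OpW w => w.2 < w_cnt (g_w g w.1)
  | OpR r => r.2 < r_cnt (g_r g r.1)
  end.

Definition read_value_ok (g : gst) (r : rid) (x : Defs.tag) :=
  r.2 < r_cnt (g_r g r.1) /\ (forall resp, r_ph (g_r g r.1) <> RGet r resp) /\
  (forall trr recv, r_ph (g_r g r.1) = RData r trr recv -> x = trr).

Definition coded_reply_ok (tr : trace) (g : gst) s (r : rid) t c :=
  r.2 < r_cnt (g_r g r.1) /\ (forall resp, r_ph (g_r g r.1) <> RGet r resp) /\
  (forall trr recv, r_ph (g_r g r.1) = RData r trr recv -> tag_le trr t) /\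
  tag_le t (srv_tag g s) /\ coded_pair_ok tr s t c.

Definition msg_ok (tr : trace) (g : gst) (src dst : proc) (p : pay) : Prop :=
  (forall s, src = Server s -> s < n) /\ (forall s, dst = Server s -> s < n) /\
  match p with
  | PTagQuery o => op_invoked g o
  | PTagResp o _ => op_invoked g o
  | PValFull w t v => List.In (LPut w t v) tr
  | PValCoded w t c => exists i v, dst = Server i /\ List.In (LPut w t v) tr /\ c = Phi i v
  | PAck w => exists s t v, src = Server s /\ List.In (LPut w t v) tr /\ tag_le t (srv_tag g s)
  | PMeta (ReadValue r x) => read_value_ok g r x
  | PMeta _ => True
  | PCoded r t c => exists s, src = Server s /\ dst = Reader r.1 /\ coded_reply_ok tr g s r t c
  end.

Definition tag_quorum (g : gst) t (Q : seq nat) :=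
  uniq Q /\ n - f <= size Q /\ all (fun s => s < n) Q /\ forall s, s \in Q -> tag_le t (srv_tag g s).

Definition resps_above (Q : seq nat) (resp : seq (nat * Defs.tag)) t1 :=
  forall s t, (s, t) \in resp -> s \in Q -> tag_le t1 t.

Definition pending_resps_above (g : gst) (Q : seq nat) (o : op) t1 :=
  forall s dst t, in_transit g (Server s) dst (PTagResp o t) -> s \in Q -> tag_le t1 t.

Definition get_tag_ok g Q o resp t1 := tag_quorum g t1 Q /\ resps_above Q resp t1 /\ pending_resps_above g Q o t1.

Definition completed_with (pre : trace) (o : op) t :=
  match o with
  | OpW w => List.In (LRespW w) pre /\ exists v, List.In (LPut w t v) pre
  | OpR r => exists v, List.In (LRespR r v t) pre
  end.

(* What an operation [o2] invoked after the completion of an operation with tag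
   [t1] owes: its outcome dominates [t1], and while it queries tags a quorum above
   [t1] remains visible to it. *)
Definition invoked_after (tr : trace) (g : gst) (o2 : op) t1 :=
  match o2 with
  | OpW w => (forall t2 v2, List.In (LPut w t2 v2) tr -> tag_lt t1 t2) /\
             (forall v resp, w_ph (g_w g w.1) = WGet w v resp ->
                exists Q, get_tag_ok g Q (OpW w) resp t1)
  | OpR r => (forall v2 t2, List.In (LRespR r v2 t2) tr -> tag_le t1 t2) /\
             (forall resp, r_ph (g_r g r.1) = RGet r resp ->
                exists Q, get_tag_ok g Q (OpR r) resp t1) /\
             (forall trr recv, r_ph (g_r g r.1) = RData r trr recv -> tag_le t1 trr)
  end.

Definition invoked_after_all (tr : trace) (g : gst) :=
  forall pre x post o2 o1 t1, tr = pre ++ x :: post -> is_inv o2 x -> completed_with pre o1 t1 ->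
    invoked_after tr g o2 t1.

Definition writer_inv (tr : trace) (g : gst) wi :=
  let st := g_w g wi in
  (forall c v, List.In (LInvW (wi, c) v) tr -> c < w_cnt st) /\
  (forall c t v, List.In (LPut (wi, c) t v) tr -> c < w_cnt st /\
        ((exists acks, w_ph st = WPut (wi, c) t acks) \/ List.In (LRespW (wi, c)) tr)) /\
  match w_ph st with
  | WIdle => True
  | WGet w v resp => w.1 = wi /\ w.2 < w_cnt st /\ List.In (LInvW w v) tr /\
      (forall t v', ~ List.In (LPut w t v') tr) /\
      uniq (map fst resp) /\ all (fun s => s < n) (map fst resp) /\
      (forall pre post v', tr = pre ++ LInvW w v' :: post ->
         forall c t vv, List.In (LPut (wi, c) t vv) tr -> completed_with pre (OpW (wi, c)) t)
  | WPut w t acks => w.1 = wi /\ w.2 < w_cnt st /\ (exists v, List.In (LPut w t v) tr) /\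
      uniq acks /\ all (fun s => s < n) acks /\ (forall s, s \in acks -> tag_le t (srv_tag g s))
  end.

Definition reader_inv (tr : trace) (g : gst) ri :=
  let st := g_r g ri in
  (forall c v t, List.In (LRespR (ri, c) v t) tr -> c < r_cnt st) /\
  (forall c, List.In (LInvR (ri, c)) tr -> c < r_cnt st) /\
  match r_ph st with
  | RIdle => True
  | RGet r resp => r.1 = ri /\ r.2 < r_cnt st /\ (forall v t, ~ List.In (LRespR r v t) tr) /\
      uniq (map fst resp) /\ all (fun s => s < n) (map fst resp)
  | RData r trr recv => r.1 = ri /\ r.2 < r_cnt st /\ (forall v t, ~ List.In (LRespR r v t) tr) /\
      (forall s t c, List.In (s, t, c) recv ->
         s < n /\ tag_le trr t /\ tag_le t (srv_tag g s) /\ coded_pair_ok tr s t c)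
  end.

Definition server_inv (tr : trace) (g : gst) :=
  forall s, coded_pair_ok tr s (srv_tag g s) (s_c (g_srv g s)) /\
            forall r x, (r, x) \in s_Rc (g_srv g s) -> read_value_ok g r x.

Definition trace_inv (tr : trace) :=
  (forall w t v t' v', List.In (LPut w t v) tr -> List.In (LPut w t' v') tr -> t = t' /\ v = v') /\
  (forall w t v, List.In (LPut w t v) tr -> t.2 = w.1 /\ 0 < t.1) /\
  (forall w w' t v v', List.In (LPut w t v) tr -> List.In (LPut w' t v') tr -> w = w') /\
  (forall r v t v' t', List.In (LRespR r v t) tr -> List.In (LRespR r v' t') tr -> v = v' /\ t = t') /\
  (forall r v t, List.In (LRespR r v t) tr -> (t = t0 /\ v = v0) \/ exists w, List.In (LPut w t v) tr) /\
  (forall w, List.In (LRespW w) tr -> exists t v, List.In (LPut w t v) tr).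

Definition soda_inv (tr : trace) (g : gst) :=
  trace_inv tr /\
  (forall o t, completed_with tr o t -> exists Q, tag_quorum g t Q) /\
  invoked_after_all tr g /\
  (forall wi, writer_inv tr g wi) /\ (forall ri, reader_inv tr g ri) /\ server_inv tr g /\
  (forall src dst p, in_transit g src dst p -> msg_ok tr g src dst p).

Lemma soda_inv_init : soda_inv [::] (init v0 Phi).
Proof.
split; [|split; [|split; [|split; [|split; [|split]]]]].
- by do !split => //.
- by move=> [w|r] t /= [].
- by move=> [|? ?].
- move=> wi; by do !split.
- move=> ri; by do !split.
- move=> s; split; [by left; split | by []].
- by move=> [?|?|?] dst p [].
Qed.

Definition silent (l : lab) : bool := match l with LPut _ _ _ | LRespW _ | LRespR _ _ _ => false | _ => true end.

Lemma In_rcons_silent (tr : trace) l x : silent l -> ~~ silent x ->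
  List.In x (rcons tr l) <-> List.In x tr.
Proof.
move=> Hl Hx; rewrite In_rcons; split; [case=> // E | by left].
by move: Hx Hl; rewrite E => /negP.
Qed.

Lemma trace_inv_silent tr l : silent l -> trace_inv tr -> trace_inv (rcons tr l).
Proof.
move=> Hl [T1 [T2 [T3 [T4 [T5 T6]]]]].
have E := (fun x Hx => @In_rcons_silent tr l x Hl Hx).
split; [|split; [|split; [|split; [|split]]]].
- move=> w t v t' v'; rewrite !E //; exact: T1.
- move=> w t v; rewrite E //; exact: T2.
- move=> w w' t v v'; rewrite !E //; exact: T3.
- move=> r v t v' t'; rewrite !E //; exact: T4.
- move=> r v t; rewrite !E // => /T5 [H|[w Hw]]; [by left | right; exists w; by rewrite E].
- move=> w; rewrite E // => /T6 [t [v H]]; exists t, v; by rewrite E.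
Qed.

Lemma completed_with_silent tr l o t : silent l -> completed_with (rcons tr l) o t -> completed_with tr o t.
Proof.
move=> Hl; case: o => [w|r] /=.
- rewrite In_rcons_silent // => -[H [v Hv]]; split => //; exists v; by rewrite In_rcons_silent in Hv.
- by move=> [v]; rewrite In_rcons_silent // => H; exists v.
Qed.

Lemma coded_pair_ok_mono (tr tr' : trace) i t c : (forall x, List.In x tr -> List.In x tr') ->
  coded_pair_ok tr i t c -> coded_pair_ok tr' i t c.
Proof. move=> S [H|[w [v [H1 H2]]]]; [by left | right; exists w, v; split => //; exact: S]. Qed.

Definition state_le (g g' : gst) :=
  (forall s, tag_le (srv_tag g s) (srv_tag g' s)) /\
  (forall wi, w_cnt (g_w g wi) <= w_cnt (g_w g' wi)) /\
  (forall ri, r_cnt (g_r g ri) <= r_cnt (g_r g' ri)) /\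
  (forall r : rid, r.2 < r_cnt (g_r g r.1) -> (forall resp, r_ph (g_r g r.1) <> RGet r resp) ->
     (forall resp, r_ph (g_r g' r.1) <> RGet r resp) /\
     (forall trr recv, r_ph (g_r g' r.1) = RData r trr recv ->
        exists recv0, r_ph (g_r g r.1) = RData r trr recv0)).

Lemma read_value_ok_ext g g' r x : state_le g g' -> read_value_ok g r x -> read_value_ok g' r x.
Proof.
move=> [_ [_ [E3 E4]]] [H1 [H2 H3]]; have [F1 F2] := E4 r H1 H2.
split; [exact: leq_trans H1 (E3 _) | split => //].
by move=> trr recv /F2 [recv0 /H3].
Qed.

Lemma coded_reply_ok_ext (tr tr' : trace) g g' s r t c : (forall x, List.In x tr -> List.In x tr') ->
  state_le g g' -> coded_reply_ok tr g s r t c -> coded_reply_ok tr' g' s r t c.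
Proof.
move=> S [E1 [_ [E3 E4]]] [H1 [H2 [H3 [H4 H5]]]]; have [F1 F2] := E4 r H1 H2.
split; [exact: leq_trans H1 (E3 _) | split => //; split].
- by move=> trr recv /F2 [recv0 /H3].
- split; [exact: tag_le_trans H4 (E1 s) | exact: coded_pair_ok_mono H5].
Qed.

Lemma op_invoked_ext g g' o : state_le g g' -> op_invoked g o -> op_invoked g' o.
Proof.
move=> [_ [E2 [E3 _]]]; case: o => [w|r] /= H; [exact: leq_trans H (E2 _) | exact: leq_trans H (E3 _)].
Qed.

Lemma tag_quorum_ext g g' t Q : state_le g g' -> tag_quorum g t Q -> tag_quorum g' t Q.
Proof.
move=> [E1 _] [H1 [H2 [H3 H4]]]; do 3 (split => //).
move=> s /H4 H; exact: tag_le_trans H (E1 s).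
Qed.

Lemma msg_ok_ext (tr tr' : trace) g g' src dst p : (forall x, List.In x tr -> List.In x tr') ->
  state_le g g' -> msg_ok tr g src dst p -> msg_ok tr' g' src dst p.
Proof.
move=> S E [B1 [B2 H]]; split => //; split => //.
case: p H => [o|o t|w t v|w t c|w|m|r t c] /=.
- exact: op_invoked_ext.
- exact: op_invoked_ext.
- exact: S.
- by move=> [i [v [H1 [H2 H3]]]]; exists i, v; split => //; split => //; exact: S.
- move=> [s [t [v [H1 [H2 H3]]]]]; exists s, t, v; split => //; split; first exact: S.
  by case: E => [E1 _]; exact: tag_le_trans H3 (E1 s).
- case: m => // r x; exact: read_value_ok_ext.
- move=> [s [H1 [H2 H3]]]; exists s; split => //; split => //; exact: coded_reply_ok_ext H3.
Qed.

(** * Server message handling *)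

Lemma In_to_servers lo cnt (p : pay) d q :
  List.In (d, q) (to_servers lo cnt p) -> q = p /\ exists i, d = Server i /\ lo <= i < lo + cnt.
Proof.
rewrite /to_servers => /List.in_map_iff [i [[<- <-] Hi]]; split => //; exists i; split => //.
have : i \in iota lo cnt by apply/In_mem.
by rewrite mem_iota.
Qed.

Lemma server_msg_ok (g' : gst) tr s d (q : pay) :
  s < n -> (forall i, d = Server i -> i < n) ->
  (match q return Prop with
  | PTagQuery o => op_invoked g' o
  | PTagResp o _ => op_invoked g' o
  | PValFull w t v => List.In (LPut w t v) tr
  | PValCoded w t c => exists i v, d = Server i /\ List.In (LPut w t v) tr /\ c = Phi i v
  | PAck w => exists s0 t v, Server s = Server s0 /\ List.In (LPut w t v) tr /\ tag_le t (srv_tag g' s0)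
  | PMeta (ReadValue r x) => read_value_ok g' r x
  | PMeta _ => True
  | PCoded r t c => exists s0, Server s = Server s0 /\ d = Reader r.1 /\ coded_reply_ok tr g' s0 r t c
  end) -> msg_ok tr g' (Server s) d q.
Proof. move=> Hs Hd H; split; [by move=> ? [<-] | by split]. Qed.

Lemma md_meta_send_ok (g' : gst) tr s m d q : s < n -> f < n ->
  (match m with ReadValue r x => read_value_ok g' r x | _ => True end) ->
  List.In (d, q) (md_meta_send V C f m) -> msg_ok tr g' (Server s) d q /\ (forall o t, q <> PTagResp o t).
Proof.
move=> Hs Hfn Hm /In_to_servers [-> [i [-> Hi]]]; split => //.
apply: server_msg_ok => //; try by case: m Hm.
move=> j [<-]; lia.
Qed.

Lemma value_deliver_ok tr (g' : gst) s w tw v c' L (st0 : sstate V C) :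
  s < n -> f < n -> List.In (LPut w tw v) tr -> c' = Phi s v ->
  (forall x, x \in L -> read_value_ok g' x.1 x.2 /\ tag_le x.2 tw) ->
  srv_tag g' s = s_tag (srv_value_deliver f s w tw c' L st0) ->
  [/\ tag_le (s_tag st0) (s_tag (srv_value_deliver f s w tw c' L st0)),
      coded_pair_ok tr s (s_tag st0) (s_c st0) -> coded_pair_ok tr s (s_tag (srv_value_deliver f s w tw c' L st0))
                      (s_c (srv_value_deliver f s w tw c' L st0)),
      s_Rc (srv_value_deliver f s w tw c' L st0) = s_Rc st0 &
      exists nw, s_out (srv_value_deliver f s w tw c' L st0) = s_out st0 ++ nw /\
        forall d q, List.In (d, q) nw -> msg_ok tr g' (Server s) d q /\
           (forall o t, q <> PTagResp o t)].
Proof.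
move=> Hs Hfn Hput Hc HL Htag; rewrite /srv_value_deliver /= in Htag *.
split => //.
- exact: (tag_max_le_l (s_tag st0) tw).
- case: ifP => // _ _; right; exists w, v; by split.
- eexists; split; first reflexivity.
  move=> d q H; case: (List.in_app_or _ _ _ H) => {}H.
  - have [x [/In_mem Hx]] := In_flatten_map H.
    case=> [[<- <-]|Hm]; last by apply: (@md_meta_send_ok g' tr s (ReadDisperse tw s x.1)).
    split => //; apply: server_msg_ok => //; exists s; split => //; split => //.
    have [[H1 [H2 H3]] H4] := HL x Hx.
    split => //; split => //; split; first by move=> trr recv /H3 <-.
    split; first by rewrite Htag; exact: (tag_max_le_r (s_tag st0) tw).
    right; exists w, v; by split.
  - case: H => [[<- <-]|//].
    split => //; apply: server_msg_ok => //; exists s, tw, v; split => //; split => //.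
    rewrite Htag; exact: (tag_max_le_r (s_tag st0) tw).
Qed.

Lemma mem_sadd (T : eqType) (x y : T) l : x \in sadd y l -> x = y \/ x \in l.
Proof.
rewrite /sadd; case: ifP => _ H; first by right.
by move: H; rewrite mem_rcons inE => /orP [/eqP ->|H]; [left | right].
Qed.

Lemma fwd_meta_ok s (m : meta) d (q : pay) : f < n -> List.In (d, q) (@fwd_meta V C n f s m) ->
  q = PMeta m /\ forall i, d = Server i -> i < n.
Proof.
move=> Hfn; rewrite /fwd_meta; case: ifP => Hs //= H.
case: (List.in_app_or _ _ _ H) => /In_to_servers [-> [i [-> Hi]]]; split => // j [<-]; lia.
Qed.

Lemma fwd_value_ok tr (g' : gst) s w t v d q : f < n -> s < n -> List.In (LPut w t v) tr ->
  List.In (d, q) (fwd_value n f Phi s w t v) -> msg_ok tr g' (Server s) d q /\ (forall o t, q <> PTagResp o t).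
Proof.
move=> Hfn Hs Hput; rewrite /fwd_value; case: ifP => Hsf //= H.
case: (List.in_app_or _ _ _ H) => {}H.
- move/In_to_servers: H => [-> [i [-> Hi]]]; split => //; apply: server_msg_ok => //.
  move=> j [<-]; lia.
- move/List.in_map_iff: H => [i [[<- <-] /In_mem]]; rewrite mem_iota => Hi.
  split => //; apply: server_msg_ok => //; first by move=> j [<-]; lia.
  by exists i, v.
Qed.

Lemma meta_deliver_tag s m (st : sstate V C) : s_tag (srv_meta_deliver n f s m st) = s_tag st.
Proof. by case: m => [r x|r x|t s1 r] /=; repeat case: ifP. Qed.

Lemma meta_deliver_coded s m (st : sstate V C) : s_c (srv_meta_deliver n f s m st) = s_c st.
Proof. by case: m => [r x|r x|t s1 r] /=; repeat case: ifP. Qed.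

Lemma meta_deliver_ok (tr : trace) (g g' : gst) s m (st : sstate V C) :
  f < n -> s < n -> g_r g' = g_r g -> srv_tag g' s = s_tag st ->
  coded_pair_ok tr s (s_tag st) (s_c st) ->
  (match m with ReadValue r x => read_value_ok g r x | _ => True end) ->
  (forall r x, (r, x) \in s_Rc st -> read_value_ok g r x) ->
  let st' := srv_meta_deliver n f s m (s_add_dmeta m (s_add_out (@fwd_meta V C n f s m) st)) in
  (forall r x, (r, x) \in s_Rc st' -> read_value_ok g r x) /\
  exists nw, s_out st' = s_out st ++ nw /\
    forall d q, List.In (d, q) nw -> msg_ok tr g' (Server s) d q /\
      (forall o t, q = PTagResp o t -> t = s_tag st).
Proof.
move=> Hfn Hs Hr Htag Hgood HM HRc; rewrite /=.
have Hfw : forall d q, List.In (d, q) (@fwd_meta V C n f s m) ->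
    msg_ok tr g' (Server s) d q /\ (forall o t, q = PTagResp o t -> t = s_tag st).
  move=> d q /(fwd_meta_ok Hfn) [-> Hd]; split => //.
  by apply: server_msg_ok => //; case: (m) HM => //= r x; rewrite /read_value_ok Hr.
case: m HM Hfw => [r x|r x|t s1 r] HM Hfw /=.
- case: ifP => _ /=; first by split => //; exists (@fwd_meta V C n f s (ReadValue r x)).
  have HRc' : forall r0 x0, (r0, x0) \in sadd (r, x) (s_Rc st) -> read_value_ok g r0 x0.
    by move=> r0 x0 /mem_sadd [[-> ->]|/HRc].
  case: ifP => Hle /=; last by split => //; exists (@fwd_meta V C n f s (ReadValue r x)).
  split => //; eexists; split; first by rewrite -catA.
  move=> d q H; case: (List.in_app_or _ _ _ H) => {}H; first exact: Hfw.
  case: H => [[<- <-]|H].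
  + split => //; apply: server_msg_ok => //; exists s; split => //; split => //.
    move: HM => [H1 [H2 H3]]; rewrite /coded_reply_ok Hr Htag /=.
    do 2 (split => //); split; first by move=> trr recv /H3 <-.
    by split; first exact: tag_le_refl.
  + have [B1 B2] := @md_meta_send_ok g' tr s (ReadDisperse (s_tag st) s r) d q Hs Hfn I H.
    split => // o t' E; by case: (B2 o t').
- case: ifP => _ /=; split => //; try by exists (@fwd_meta V C n f s (ReadComplete r x)).
  by move=> r0 x0; rewrite mem_filter => /andP [_ /HRc].
- case: ifP => _ /=; split => //; try by exists (@fwd_meta V C n f s (ReadDisperse t s1 r)).
  by move=> r0 x0; rewrite mem_filter => /andP [_ /HRc].
Qed.

Lemma deliverable_reads_ok (g g' : gst) (st : sstate V C) t L :
  g_r g' = g_r g -> (forall r x, (r, x) \in s_Rc st -> read_value_ok g r x) ->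
  perm_eq L [seq x <- s_Rc st | tag_le x.2 t] ->
  forall x, x \in L -> read_value_ok g' x.1 x.2 /\ tag_le x.2 t.
Proof.
move=> Hr HRc HL [r x]; rewrite (perm_mem HL) mem_filter => /andP [H1 H2]; split => //.
by rewrite /read_value_ok Hr; exact: HRc _ _ H2.
Qed.

Lemma srv_recv_ok tr (g g' : gst) src s (p : pay) st' :
  f < n ->
  msg_ok tr g src (Server s) p ->
  coded_pair_ok tr s (srv_tag g s) (s_c (g_srv g s)) ->
  (forall r x, (r, x) \in s_Rc (g_srv g s) -> read_value_ok g r x) ->
  srv_recv n f Phi s p (g_srv g s) st' ->
  g_w g' = g_w g -> g_r g' = g_r g -> srv_tag g' s = s_tag st' ->
  [/\ tag_le (srv_tag g s) (s_tag st'),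
      coded_pair_ok tr s (s_tag st') (s_c st'),
      (forall r x, (r, x) \in s_Rc st' -> read_value_ok g r x) &
      exists nw, s_out st' = s_out (g_srv g s) ++ nw /\
        forall d q, List.In (d, q) nw -> msg_ok tr g' (Server s) d q /\
           (forall o t, q = PTagResp o t -> t = s_tag st')].
Proof.
move=> Hfn [_ [Hs' HM]] Hgood HRc HR Hw Hr Htag.
have Hs : s < n by exact: Hs'.
rewrite /srv_tag in Hgood *.
case: HR Hgood HRc HM Htag.
- move=> o st Hgood HRc HM Htag; split => //; first exact: tag_le_refl.
  exists [:: (client_of o, PTagResp o (s_tag st))]; split => //.
  move=> d q [[<- <-]|//]; split; last by move=> o' t' [_ <-].
  apply: server_msg_ok => //; first by case: o {HM Htag}.
  by move: HM; case: (o) => [w|r]; rewrite /op_invoked ?Hw ?Hr.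
- move=> w t v st _ Hgood HRc _ _.
  by split => //; [exact: tag_le_refl | exists [::]; rewrite cats0].
- move=> w t v L st _ HL Hgood HRc HM Htag.
  have HL' := deliverable_reads_ok Hr HRc HL.
  have [A1 A2 A3 [nw [A4 A5]]] := @value_deliver_ok tr g' s w t v (Phi s v) L _ Hs Hfn HM erefl HL' Htag.
  split => //; first exact: A2.
  exists (fwd_value n f Phi s w t v ++ nw); rewrite A4 /= catA; split => //.
  move=> d q H; case: (List.in_app_or _ _ _ H) => {}H.
  + have [B1 B2] := fwd_value_ok g' Hfn Hs HM H; split => // o t' E; by case: (B2 o t').
  + have [B1 B2] := A5 d q H; split => // o t' E; by case: (B2 o t').
- move=> w t c st _ Hgood HRc _ _.
  by split => //; [exact: tag_le_refl | exists [::]; rewrite cats0].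
- move=> w t c L st _ HL Hgood HRc HM Htag.
  move: HM => [i [v [[<-] [Hput ->]]]].
  have HL' := deliverable_reads_ok Hr HRc HL.
  have [A1 A2 A3 [nw [A4 A5]]] := @value_deliver_ok tr g' s w t v (Phi s v) L _ Hs Hfn Hput erefl HL' Htag.
  split => //; first exact: A2.
  exists nw; rewrite A4; split => //.
  move=> d q H; have [B1 B2] := A5 d q H; split => // o t' E; by case: (B2 o t').
- move=> m st _ Hgood HRc _ _.
  by split => //; [exact: tag_le_refl | exists [::]; rewrite cats0].
- move=> m st _ Hgood HRc HM Htag.
  rewrite meta_deliver_tag /= in Htag.
  have [HRc' [nw [Hout Hnw]]] := meta_deliver_ok Hfn Hs Hr Htag Hgood HM HRc.
  rewrite meta_deliver_tag meta_deliver_coded /=; split => //; first exact: tag_le_refl.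
  by exists nw; split => // d q /Hnw [? Ht]; split => // o t /Ht ->.
Qed.

(** * Frame lemmas and silent steps *)

Definition fresh_resps (g g' : gst) :=
  forall s dst o t, in_transit g' (Server s) dst (PTagResp o t) ->
    in_transit g (Server s) dst (PTagResp o t) \/ tag_le (srv_tag g' s) t.

Lemma get_tag_ok_ext g g' Q o resp t1 : state_le g g' -> fresh_resps g g' ->
  get_tag_ok g Q o resp t1 -> get_tag_ok g' Q o resp t1.
Proof.
move=> E RC [H1 [H2 H3]]; have H1' := tag_quorum_ext E H1; split => //; split => //.
move=> s dst t /RC [H|H] Hs; first exact: H3 H Hs.
move: H1' => [_ [_ [_ H4]]]; exact: tag_le_trans (H4 s Hs) H.
Qed.

Definition about_writer (wi : nat) (l : lab) : bool :=
  match l with LInvW w _ | LPut w _ _ | LRespW w => w.1 == wi | _ => false end.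
Definition about_reader (ri : nat) (l : lab) : bool :=
  match l with LInvR r | LRespR r _ _ => r.1 == ri | _ => false end.

Lemma writer_inv_frame tr g g' l wi : state_le g g' -> ~~ about_writer wi l ->
  w_cnt (g_w g' wi) = w_cnt (g_w g wi) -> w_ph (g_w g' wi) = w_ph (g_w g wi) ->
  writer_inv tr g wi -> writer_inv (rcons tr l) g' wi.
Proof.
move=> [E1 _] Hl Ec Ep [W1 [W2 W3]]; rewrite /writer_inv Ec Ep.
have NI : forall x, about_writer wi x -> List.In x (rcons tr l) -> List.In x tr.
  move=> x Hx; rewrite In_rcons => -[//|E]; by move: Hl; rewrite -E Hx.
split; [|split].
- move=> c v /NI H; apply: W1; apply: H; exact: eqxx.
- move=> c t v /NI H; have [H1 H2] := W2 c t v (H (eqxx _)); split => //.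
  case: H2 => [H2|H2]; [by left | right; exact: In_rcons_l].
- case: (w_ph (g_w g wi)) W3 => // [w v resp|w t acks].
  + move=> [A1 [A2 [A3 [A4 [A5 [A6 A7]]]]]].
    do 2 (split => //); split; first exact: In_rcons_l.
    split; first by move=> t v' /NI H; apply: (A4 t v'); apply: H; rewrite /= A1.
    do 2 (split => //).
    move=> pre post v' Ed; case: (decomp_rcons Ed) => [[_ [El _]]|[post' [_ Etr]]].
    * by move: Hl; rewrite -El /= A1 eqxx.
    * move=> c t vv /NI H; apply: (A7 pre post' v' Etr); apply: H; exact: eqxx.
  + move=> [A1 [A2 [[v A3] [A4 [A5 A6]]]]].
    do 2 (split => //); split; first by exists v; exact: In_rcons_l.
    do 2 (split => //).
    move=> s /A6 H; exact: tag_le_trans H (E1 s).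
Qed.

Lemma reader_inv_frame tr tr' g g' ri : state_le g g' ->
  (forall x, about_reader ri x -> List.In x tr' -> List.In x tr) -> (forall x, List.In x tr -> List.In x tr') ->
  r_cnt (g_r g' ri) = r_cnt (g_r g ri) -> r_ph (g_r g' ri) = r_ph (g_r g ri) ->
  reader_inv tr g ri -> reader_inv tr' g' ri.
Proof.
move=> [E1 _] NI Sub Ec Ep [R1 [R2 R3]]; rewrite /reader_inv Ec Ep.
split; [|split].
- move=> c v t /NI H; apply: R1; apply: H; exact: eqxx.
- move=> c /NI H; apply: R2; apply: H; exact: eqxx.
- case: (r_ph (g_r g ri)) R3 => // [r resp|r trr recv].
  + move=> [A1 [A2 [A3 A4]]]; do 2 (split => //); split => // v t /NI H.
    apply: (A3 v t); apply: H; by rewrite /= A1.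
  + move=> [A1 [A2 [A3 A4]]]; do 2 (split => //); split.
    * move=> v t /NI H; apply: (A3 v t); apply: H; by rewrite /= A1.
    * move=> s t c /A4 [B1 [B2 [B3 B4]]]; do 2 (split => //); split.
      -- exact: tag_le_trans B3 (E1 s).
      -- exact: coded_pair_ok_mono B4.
Qed.

Lemma invoked_after_frame tr g g' l o2 t1 : state_le g g' -> fresh_resps g g' ->
  (forall w, o2 = OpW w -> w_ph (g_w g' w.1) = w_ph (g_w g w.1) /\ forall t v, l <> LPut w t v) ->
  (forall r, o2 = OpR r -> r_ph (g_r g' r.1) = r_ph (g_r g r.1) /\ forall v t, l <> LRespR r v t) ->
  invoked_after tr g o2 t1 -> invoked_after (rcons tr l) g' o2 t1.
Proof.
move=> E RC; case: o2 => [w|r] HW HR /=.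
- have [Ep Hl] := HW w erefl; move=> [F1 F2]; split.
  + move=> t2 v2; rewrite In_rcons => -[H|H]; [exact: F1 H | by case: (Hl t2 v2)].
  + move=> v resp; rewrite Ep => /F2 [Q HQ]; exists Q; exact: get_tag_ok_ext HQ.
- have [Ep Hl] := HR r erefl; move=> [F1 [F2 F3]]; split; [|split].
  + move=> v2 t2; rewrite In_rcons => -[H|H]; [exact: F1 H | by case: (Hl v2 t2)].
  + move=> resp; rewrite Ep => /F2 [Q HQ]; exists Q; exact: get_tag_ok_ext HQ.
  + move=> trr recv; rewrite Ep; exact: F3.
Qed.

Lemma state_le_refl g : state_le g g.
Proof.
split; [by move=> s; exact: tag_le_refl | split; [by [] | split; [by [] |]]].
move=> r _ H; split => // trr recv ->; by exists recv.
Qed.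

Lemma In_rcons_tau (tr : trace) x : List.In x (rcons tr LTau) -> x <> LTau -> List.In x tr.
Proof. by rewrite In_rcons => -[]. Qed.

Lemma silent_step_inv tr g g' :
  soda_inv tr g ->
  (forall s, tag_le (srv_tag g s) (srv_tag g' s)) ->
  (forall wi, w_cnt (g_w g' wi) = w_cnt (g_w g wi) /\ w_ph (g_w g' wi) = w_ph (g_w g wi)) ->
  (forall ri, r_cnt (g_r g' ri) = r_cnt (g_r g ri) /\ r_ph (g_r g' ri) = r_ph (g_r g ri)) ->
  (forall src dst p, in_transit g' src dst p -> in_transit g src dst p \/
      (msg_ok tr g' src dst p /\ forall s o t, src = Server s -> p = PTagResp o t -> tag_le (srv_tag g' s) t)) ->
  (forall s, coded_pair_ok tr s (srv_tag g' s) (s_c (g_srv g' s))) ->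
  (forall s r x, (r, x) \in s_Rc (g_srv g' s) -> read_value_ok g r x) ->
  soda_inv (rcons tr LTau) g'.
Proof.
move=> [HT [HQ [HFR [HW [HR [HS HM]]]]]] Htag Hw Hr Hm Hgood HRc.
have E : state_le g g'.
  split => //; split; first by move=> wi; rewrite (proj1 (Hw wi)).
  split; first by move=> ri; rewrite (proj1 (Hr ri)).
  move=> r H1 H2; rewrite (proj2 (Hr r.1)); split => // trr recv ->; by exists recv.
have RC : fresh_resps g g'.
  move=> s dst o t /Hm [H|[_ H]]; [by left | right; exact: H s o t erefl erefl].
have Sub := @In_rcons_l _ tr LTau.
split; [|split; [|split; [|split; [|split; [|split]]]]].
- exact: trace_inv_silent.
- move=> o t /(completed_with_silent (l := LTau) isT) /HQ [Q HQ']; exists Q; exact: tag_quorum_ext HQ'.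
- move=> pre x post o2 o1 t1 Ed Hinv Hd; case: (decomp_rcons Ed) => [[_ [Ex _]]|[post' [_ Etr]]].
  + by move: Hinv; rewrite Ex; case: o2.
  + apply: invoked_after_frame (HFR _ _ _ _ _ _ Etr Hinv Hd) => //.
    * by move=> w _; split; [exact: (proj2 (Hw _)) | done].
    * by move=> r _; split; [exact: (proj2 (Hr _)) | done].
- move=> wi; exact: (writer_inv_frame E _ (proj1 (Hw wi)) (proj2 (Hw wi)) (HW wi)).
- move=> ri; apply: (reader_inv_frame E _ Sub (proj1 (Hr ri)) (proj2 (Hr ri)) (HR ri)).
  move=> x Hx /In_rcons_tau; apply; by move=> Ex; rewrite Ex in Hx.
- move=> s; split; first exact: coded_pair_ok_mono (Hgood s).
  move=> r x /HRc; exact: read_value_ok_ext.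
- move=> src dst p /Hm [H|[H _]].
  + exact: msg_ok_ext (HM _ _ _ H).
  + exact: msg_ok_ext (state_le_refl g') H.
Qed.

Lemma send_server_inv tr g s dst p rest :
  soda_inv tr g -> s_out (g_srv g s) = (dst, p) :: rest ->
  soda_inv (rcons tr LTau) (g_set_net (g_set_srv g s (s_set_out rest (g_srv g s))) (rcons (g_net g) (Server s, dst, p))).
Proof.
move=> I Hout; have [_ [_ [_ [_ [_ [HS _]]]]]] := I.
apply: (silent_step_inv I) => //.
- move=> j; rewrite /srv_tag /= /upd; case: eqP => [->|_] /=; exact: tag_le_refl.
- move=> src d q; left; move: H; rewrite /in_transit /= In_rcons => -[[H|[->]]|H].
  + by left.
  + move=> -> ->; right; rewrite Hout; by left.
  + right; case: src H => // j; rewrite /upd; case: eqP => [->|_] //= H; rewrite Hout; by right.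
- move=> j; rewrite /srv_tag /= /upd; case: eqP => [Ej|_] /=; [subst j|]; exact: (proj1 (HS _)).
- move=> j r x; rewrite /= /upd; case: eqP => [Ej|_] /=; [subst j|]; exact: (proj2 (HS _)).
Qed.

Lemma send_writer_inv tr g wi dst p rest :
  soda_inv tr g -> w_out (g_w g wi) = (dst, p) :: rest ->
  soda_inv (rcons tr LTau) (g_set_net (g_set_w g wi (w_set (w_cnt (g_w g wi)) (w_ph (g_w g wi)) rest (g_w g wi)))
                           (rcons (g_net g) (Writer wi, dst, p))).
Proof.
move=> I Hout; have [_ [_ [_ [_ [_ [HS _]]]]]] := I.
apply: (silent_step_inv I) => //.
- move=> j; exact: tag_le_refl.
- move=> j; rewrite /= /upd; case: eqP => [Ej|_] /=; [subst j|]; by [].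
- move=> src d q; left; move: H; rewrite /in_transit /= In_rcons => -[[H|[->]]|H].
  + by left.
  + move=> -> ->; right; rewrite Hout; by left.
  + right; case: src H => // j; rewrite /upd; case: eqP => [->|_] //= H; rewrite Hout; by right.
- move=> j; exact: (proj1 (HS _)).
- move=> j r x; exact: (proj2 (HS _)).
Qed.

Lemma send_reader_inv tr g ri dst p rest :
  soda_inv tr g -> r_out (g_r g ri) = (dst, p) :: rest ->
  soda_inv (rcons tr LTau) (g_set_net (g_set_r g ri (r_set (r_cnt (g_r g ri)) (r_ph (g_r g ri)) rest (g_r g ri)))
                           (rcons (g_net g) (Reader ri, dst, p))).
Proof.
move=> I Hout; have [_ [_ [_ [_ [_ [HS _]]]]]] := I.
apply: (silent_step_inv I) => //.
- move=> j; exact: tag_le_refl.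
- move=> j; rewrite /= /upd; case: eqP => [Ej|_] /=; [subst j|]; by [].
- move=> src d q; left; move: H; rewrite /in_transit /= In_rcons => -[[H|[->]]|H].
  + by left.
  + move=> -> ->; right; rewrite Hout; by left.
  + right; case: src H => // j; rewrite /upd; case: eqP => [->|_] //= H; rewrite Hout; by right.
- move=> j; exact: (proj1 (HS _)).
- move=> j r x; exact: (proj2 (HS _)).
Qed.

Lemma crash_server_inv tr g s :
  soda_inv tr g -> soda_inv (rcons tr LTau) (g_set_srv g s (s_crash (g_srv g s))).
Proof.
move=> I; have [_ [_ [_ [_ [_ [HS _]]]]]] := I.
apply: (silent_step_inv I) => //.
- move=> j; rewrite /srv_tag /= /upd; case: eqP => [->|_] /=; exact: tag_le_refl.
- move=> src d q H; left; move: H; rewrite /in_transit /= => -[H|H]; first by left.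
  right; case: src H => // j; rewrite /upd; case: eqP => [->|_] //.
- move=> j; rewrite /srv_tag /= /upd; case: eqP => [Ej|_] /=; [subst j|]; exact: (proj1 (HS _)).
- move=> j r x; rewrite /= /upd; case: eqP => [Ej|_] /=; [subst j|]; exact: (proj2 (HS _)).
Qed.

Lemma crash_writer_inv tr g wi :
  soda_inv tr g -> soda_inv (rcons tr LTau) (g_set_w g wi (WState (w_cnt (g_w g wi)) (w_ph (g_w g wi)) true (w_out (g_w g wi)))).
Proof.
move=> I; have [_ [_ [_ [_ [_ [HS _]]]]]] := I.
apply: (silent_step_inv I) => //.
- move=> j; exact: tag_le_refl.
- move=> j; rewrite /= /upd; case: eqP => [Ej|_] /=; [subst j|]; by [].
- move=> src d q H; left; move: H; rewrite /in_transit /= => -[H|H]; first by left.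
  right; case: src H => // j; rewrite /upd; case: eqP => [->|_] //.
- move=> j; exact: (proj1 (HS _)).
- move=> j r x; exact: (proj2 (HS _)).
Qed.

Lemma crash_reader_inv tr g ri :
  soda_inv tr g -> soda_inv (rcons tr LTau) (g_set_r g ri (RState (r_cnt (g_r g ri)) (r_ph (g_r g ri)) true (r_out (g_r g ri)))).
Proof.
move=> I; have [_ [_ [_ [_ [_ [HS _]]]]]] := I.
apply: (silent_step_inv I) => //.
- move=> j; exact: tag_le_refl.
- move=> j; rewrite /= /upd; case: eqP => [Ej|_] /=; [subst j|]; by [].
- move=> src d q H; left; move: H; rewrite /in_transit /= => -[H|H]; first by left.
  right; case: src H => // j; rewrite /upd; case: eqP => [->|_] //.
- move=> j; exact: (proj1 (HS _)).
- move=> j r x; exact: (proj2 (HS _)).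
Qed.

Lemma recv_server_inv tr g n1 n2 src s p st' :
  f < n -> soda_inv tr g -> g_net g = n1 ++ (src, Server s, p) :: n2 ->
  srv_recv n f Phi s p (g_srv g s) st' ->
  soda_inv (rcons tr LTau) (g_set_net (g_set_srv g s st') (n1 ++ n2)).
Proof.
move=> Hfn I Hnet HR; have [_ [_ [_ [_ [_ [HS HM]]]]]] := I.
set g' := g_set_net _ _.
have Hin : in_transit g src (Server s) p.
  left; rewrite Hnet; apply: List.in_or_app; right; by left.
have Htag : srv_tag g' s = s_tag st' by rewrite /srv_tag /= /upd eqxx.
have [A1 A2 A3 [nw [A4 A5]]] :=
  @srv_recv_ok tr g g' src s p st' Hfn (HM _ _ _ Hin) (proj1 (HS s)) (proj2 (HS s)) HR erefl erefl Htag.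
apply: (silent_step_inv I) => //.
- move=> j; rewrite /srv_tag /= /upd; case: eqP => [Ej|_] /=; [subst j; exact: A1 | exact: tag_le_refl].
- move=> src' d q [H|H].
  + left; left; rewrite Hnet; exact: In_app_insert.
  + case: src' H => [j|j|j] H; try by left; right.
    move: H; rewrite /= /upd; case: eqP => [Ej|_] H; last by left; right.
    subst j; rewrite A4 in H; case: (List.in_app_or _ _ _ H) => {}H; first by left; right.
    right; have [B1 B2] := A5 d q H; split => // s0 o t [<-] E.
    by rewrite Htag (B2 o t E); exact: tag_le_refl.
- move=> j; rewrite /srv_tag /= /upd; case: eqP => [Ej|_] /=; [subst j; exact: A2 | exact: (proj1 (HS _))].
- move=> j r x; rewrite /= /upd; case: eqP => [Ej|_] /=; [subst j; exact: A3 | exact: (proj2 (HS _))].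
Qed.

(** * Client steps *)

Lemma writer_step_invoked_after tr g g' (l : lab) wi :
  state_le g g' -> fresh_resps g g' ->
  (forall j, j != wi -> g_w g' j = g_w g j) -> g_r g' = g_r g ->
  (l = LTau \/ about_writer wi l) -> invoked_after_all tr g ->
  (forall pre x post w o1 t1, rcons tr l = pre ++ x :: post -> is_inv (OpW w) x -> w.1 = wi ->
      completed_with pre o1 t1 -> invoked_after (rcons tr l) g' (OpW w) t1) ->
  invoked_after_all (rcons tr l) g'.
Proof.
move=> E RC Ew Er Hl HFR HFR' pre x post o2 o1 t1 Ed Hinv Hd.
case: o2 Hinv => [w|r] Hinv.
- case: (w.1 =P wi) => [Ew1|Nw1]; first exact: HFR' Ed Hinv Ew1 Hd.
  case: (decomp_rcons Ed) => [[_ [Ex _]]|[post' [_ Etr]]].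
  + subst x; exfalso; apply: Nw1; case: Hl Hinv => [->|] //; case: (l) => //= w' v' H1 H2; subst w'; exact/eqP.
  + apply: invoked_after_frame (HFR _ _ _ _ _ _ Etr Hinv Hd) => //.
    move=> w0 [<-]; rewrite Ew; last by apply/eqP.
    split => // t v El; move: Hl; rewrite El => -[E0|/eqP]; [discriminate | exact: Nw1].
- case: (decomp_rcons Ed) => [[_ [Ex _]]|[post' [_ Etr]]].
  + subst x; by case: Hl Hinv => [->|] //; case: (l).
  + apply: invoked_after_frame (HFR _ _ _ _ _ _ Etr Hinv Hd) => //.
    move=> r0 [<-]; rewrite Er; split => // v t El; case: Hl => [//|]; by rewrite El.
Qed.

Lemma reader_step_invoked_after tr g g' (l : lab) ri :
  state_le g g' -> fresh_resps g g' ->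
  g_w g' = g_w g -> (forall j, j != ri -> g_r g' j = g_r g j) ->
  (l = LTau \/ about_reader ri l) -> invoked_after_all tr g ->
  (forall pre x post r o1 t1, rcons tr l = pre ++ x :: post -> is_inv (OpR r) x -> r.1 = ri ->
      completed_with pre o1 t1 -> invoked_after (rcons tr l) g' (OpR r) t1) ->
  invoked_after_all (rcons tr l) g'.
Proof.
move=> E RC Ew Er Hl HFR HFR' pre x post o2 o1 t1 Ed Hinv Hd.
case: o2 Hinv => [w|r] Hinv.
- case: (decomp_rcons Ed) => [[_ [Ex _]]|[post' [_ Etr]]].
  + subst x; by case: Hl Hinv => [->|] //; case: (l).
  + apply: invoked_after_frame (HFR _ _ _ _ _ _ Etr Hinv Hd) => //.
    move=> w0 [<-]; rewrite Ew; split => // t v El; move: Hl; rewrite El => -[E0|E0]; discriminate.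
- case: (r.1 =P ri) => [Er1|Nr1]; first exact: HFR' Ed Hinv Er1 Hd.
  case: (decomp_rcons Ed) => [[_ [Ex _]]|[post' [_ Etr]]].
  + subst x; exfalso; apply: Nr1; case: Hl Hinv => [->|] //; case: (l) => //= r' H1 H2; subst r'; exact/eqP.
  + apply: invoked_after_frame (HFR _ _ _ _ _ _ Etr Hinv Hd) => //.
    move=> r0 [<-]; rewrite Er; last by apply/eqP.
    split => // v t El; move: Hl; rewrite El => -[E0|/eqP]; [discriminate | exact: Nr1].
Qed.

Lemma writer_step_inv tr g (l : lab) wi st' net' :
  let g' := g_set_net (g_set_w g wi st') net' in
  soda_inv tr g ->
  w_cnt (g_w g wi) <= w_cnt st' ->
  (l = LTau \/ about_writer wi l) ->
  (forall x, List.In x net' -> List.In x (g_net g)) ->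
  (forall d q, List.In (d, q) (w_out st') -> List.In (d, q) (w_out (g_w g wi)) \/ msg_ok (rcons tr l) g' (Writer wi) d q) ->
  trace_inv (rcons tr l) ->
  (forall o t, completed_with (rcons tr l) o t -> completed_with tr o t \/ exists Q, tag_quorum g' t Q) ->
  (forall pre x post w o1 t1, rcons tr l = pre ++ x :: post -> is_inv (OpW w) x -> w.1 = wi ->
      completed_with pre o1 t1 -> invoked_after (rcons tr l) g' (OpW w) t1) ->
  writer_inv (rcons tr l) g' wi ->
  soda_inv (rcons tr l) g'.
Proof.
move=> g' [HT [HQ [HFR [HW [HR [HS HM]]]]]] Hcnt Hl Hnet Hout HT' HQ' HFR' HW'.
have Ew : forall j, j != wi -> g_w g' j = g_w g j by move=> j /negbTE Hj; rewrite /g' /= /upd Hj.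
have E : state_le g g'.
  split; first by move=> s; exact: tag_le_refl.
  split; first by move=> j; rewrite /g' /= /upd; case: eqP => [->|_].
  split => //; move=> r H1 H2; split => // trr recv ->; by exists recv.
have RC : fresh_resps g g'.
  move=> s dst o t [H|H]; left; [left; exact: Hnet | by right].
have Sub := @In_rcons_l _ tr l.
have NR : forall ri x, about_reader ri x -> List.In x (rcons tr l) -> List.In x tr.
  move=> ri x Hx; rewrite In_rcons => -[//|Ex]; subst x.
  by case: Hl => [El|]; [rewrite El in Hx | case: (l) Hx].
split; [|split; [|split; [|split; [|split; [|split]]]]] => //.
- move=> o t /HQ' [/HQ [Q HQ0]|//]; exists Q; exact: tag_quorum_ext HQ0.
- exact: writer_step_invoked_after E RC Ew erefl Hl HFR HFR'.
- move=> j; case: (j =P wi) => [->|Nj] //.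
  apply: (writer_inv_frame E); last exact: HW.
  + case: Hl => [->//|Ha]; apply/negP => Hb; apply: Nj; move: Ha Hb.
    by case: (l) => //= [w v|w t v|w] /eqP -> /eqP ->.
  + by rewrite Ew //; apply/eqP.
  + by rewrite Ew //; apply/eqP.
- move=> ri; exact: (reader_inv_frame E (NR ri) Sub erefl erefl (HR ri)).
- move=> s; split; first exact: coded_pair_ok_mono (proj1 (HS s)).
  move=> r x /(proj2 (HS s)); exact: read_value_ok_ext.
- move=> src dst p [H|H].
  + apply: msg_ok_ext (HM src dst p _) => //; left; exact: Hnet.
  + case: src H => [j|j|j] H; try by apply: msg_ok_ext (HM _ dst p _) => //; right.
    move: H; rewrite /g' /= /upd; case: eqP => [Ej|Nj] H; last by apply: msg_ok_ext (HM _ dst p _) => //; right.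
    subst j; case: (Hout _ _ H) => // H'; apply: msg_ok_ext (HM _ dst p _) => //; by right.
Qed.

Lemma reader_step_inv tr g (l : lab) ri st' net' :
  let g' := g_set_net (g_set_r g ri st') net' in
  soda_inv tr g ->
  r_cnt (g_r g ri) <= r_cnt st' ->
  (forall r : rid, r.2 < r_cnt (g_r g r.1) -> (forall resp, r_ph (g_r g r.1) <> RGet r resp) ->
     (forall resp, r_ph (g_r g' r.1) <> RGet r resp) /\
     (forall trr recv, r_ph (g_r g' r.1) = RData r trr recv ->
        exists recv0, r_ph (g_r g r.1) = RData r trr recv0)) ->
  (l = LTau \/ about_reader ri l) ->
  (forall x, List.In x net' -> List.In x (g_net g)) ->
  (forall d q, List.In (d, q) (r_out st') -> List.In (d, q) (r_out (g_r g ri)) \/ msg_ok (rcons tr l) g' (Reader ri) d q) ->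
  trace_inv (rcons tr l) ->
  (forall o t, completed_with (rcons tr l) o t -> completed_with tr o t \/ exists Q, tag_quorum g' t Q) ->
  (forall pre x post r o1 t1, rcons tr l = pre ++ x :: post -> is_inv (OpR r) x -> r.1 = ri ->
      completed_with pre o1 t1 -> invoked_after (rcons tr l) g' (OpR r) t1) ->
  reader_inv (rcons tr l) g' ri ->
  soda_inv (rcons tr l) g'.
Proof.
move=> g' [HT [HQ [HFR [HW [HR [HS HM]]]]]] Hcnt HE4 Hl Hnet Hout HT' HQ' HFR' HR'.
have Er : forall j, j != ri -> g_r g' j = g_r g j by move=> j /negbTE Hj; rewrite /g' /= /upd Hj.
have E : state_le g g'.
  split; first by move=> s; exact: tag_le_refl.
  split => //; split => //; by move=> j; rewrite /g' /= /upd; case: eqP => [->|_].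
have RC : fresh_resps g g'.
  move=> s dst o t [H|H]; left; [left; exact: Hnet | by right].
have Sub := @In_rcons_l _ tr l.
split; [|split; [|split; [|split; [|split; [|split]]]]] => //.
- move=> o t /HQ' [/HQ [Q HQ0]|//]; exists Q; exact: tag_quorum_ext HQ0.
- exact: reader_step_invoked_after E RC erefl Er Hl HFR HFR'.
- move=> j; apply: (writer_inv_frame E); last exact: HW.
  + by case: Hl => [->|]; case: (l).
  + by [].
  + by [].
- move=> j; case: (j =P ri) => [->|Nj] //.
  apply: (reader_inv_frame E); last exact: HR.
  + move=> x Hx; rewrite In_rcons => -[//|Ex]; subst x; exfalso; apply: Nj.
    by case: Hl Hx => [->|] //; case: (l) => //= [r|r v t] /eqP -> /eqP ->.
  + exact: Sub.
  + by rewrite Er //; apply/eqP.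
  + by rewrite Er //; apply/eqP.
- move=> s; split; first exact: coded_pair_ok_mono (proj1 (HS s)).
  move=> r x /(proj2 (HS s)); exact: read_value_ok_ext.
- move=> src dst p [H|H].
  + apply: msg_ok_ext (HM src dst p _) => //; left; exact: Hnet.
  + case: src H => [j|j|j] H; try by apply: msg_ok_ext (HM _ dst p _) => //; right.
    move: H; rewrite /g' /= /upd; case: eqP => [Ej|Nj] H; last by apply: msg_ok_ext (HM _ dst p _) => //; right.
    subst j; case: (Hout _ _ H) => // H'; apply: msg_ok_ext (HM _ dst p _) => //; by right.
Qed.

Lemma add_resp_mem s t resp x : x \in add_resp s t resp -> x \in resp \/ x = (s, t).
Proof.
rewrite /add_resp; case: ifP => _ H; first by left.
by move: H; rewrite mem_rcons inE => /orP [/eqP ->|H]; [right | left].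
Qed.

Lemma add_resp_uniq s t resp : uniq (map fst resp) -> uniq (map fst (add_resp s t resp)).
Proof.
rewrite /add_resp; case: ifP => H U //; by rewrite map_rcons rcons_uniq H U.
Qed.

Lemma add_resp_all s t resp : s < n -> all (fun s => s < n) (map fst resp) ->
  all (fun s => s < n) (map fst (add_resp s t resp)).
Proof.
rewrite /add_resp; case: ifP => H //; by rewrite map_rcons all_rcons => -> ->.
Qed.

Lemma resps_above_add Q s t resp t1 : resps_above Q resp t1 -> (s \in Q -> tag_le t1 t) ->
  resps_above Q (add_resp s t resp) t1.
Proof.
move=> H1 H2 s0 t0 /add_resp_mem [H|[-> ->]]; [exact: H1 | exact: H2].
Qed.

Lemma get_tag_bound g Q o resp t1 s d t :
  f <= (n - 1) %/ 2 ->
  get_tag_ok g Q o resp t1 -> in_transit g (Server s) d (PTagResp o t) ->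
  uniq (map fst resp) -> all (fun s => s < n) (map fst resp) -> s < n ->
  majority n (add_resp s t resp) ->
  tag_le t1 (max_tag (add_resp s t resp)).
Proof.
move=> Hf [[UQ [SQ [AQ _]]] [HR HM]] Hin U A Hs Hmaj.
have Hsize : n < size Q + size (map fst (add_resp s t resp)).
  by move: Hmaj; rewrite /majority size_map; lia.
have [s0 H1 H2] := uniq_bounded_meet UQ (add_resp_uniq s t U) AQ (add_resp_all t Hs A) Hsize.
move/mapP: H2 => [[s1 t2] Hm /= Es]; subst s1.
apply: tag_le_trans (max_tag_in Hm).
case: (add_resp_mem Hm) => [H|[E1 E2]]; first exact: HR H H1.
subst s0 t2; exact: HM Hin H1.
Qed.

Lemma in_transit_writer_step g wi st' n1 n2 x s0 d q :
  g_net g = n1 ++ x :: n2 ->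
  in_transit (g_set_net (g_set_w g wi st') (n1 ++ n2)) (Server s0) d q -> in_transit g (Server s0) d q.
Proof. move=> Hnet [H|H]; [left; rewrite Hnet; exact: In_app_insert | by right]. Qed.

Lemma in_transit_reader_step g ri st' n1 n2 x s0 d q :
  g_net g = n1 ++ x :: n2 ->
  in_transit (g_set_net (g_set_r g ri st') (n1 ++ n2)) (Server s0) d q -> in_transit g (Server s0) d q.
Proof. move=> Hnet [H|H]; [left; rewrite Hnet; exact: In_app_insert | by right]. Qed.

Lemma writer_ignore_inv tr g n1 n2 x wi :
  soda_inv tr g -> g_net g = n1 ++ x :: n2 ->
  soda_inv (rcons tr LTau) (g_set_net (g_set_w g wi (g_w g wi)) (n1 ++ n2)).
Proof.
move=> I Hnet; have [_ [_ [_ [_ [_ [HS _]]]]]] := I.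
apply: (silent_step_inv I) => //.
- move=> j; exact: tag_le_refl.
- move=> j; rewrite /= /upd; case: eqP => [Ej|_] /=; [subst j|]; by [].
- move=> src d q [H|H]; left; first by left; rewrite Hnet; exact: In_app_insert.
  right; case: src H => // j; rewrite /= /upd; case: eqP => [->|_] //.
- move=> j; exact: (proj1 (HS _)).
- move=> j r x0; exact: (proj2 (HS _)).
Qed.

Lemma reader_ignore_inv tr g n1 n2 x ri :
  soda_inv tr g -> g_net g = n1 ++ x :: n2 ->
  soda_inv (rcons tr LTau) (g_set_net (g_set_r g ri (g_r g ri)) (n1 ++ n2)).
Proof.
move=> I Hnet; have [_ [_ [_ [_ [_ [HS _]]]]]] := I.
apply: (silent_step_inv I) => //.
- move=> j; exact: tag_le_refl.
- move=> j; rewrite /= /upd; case: eqP => [Ej|_] /=; [subst j|]; by [].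
- move=> src d q [H|H]; left; first by left; rewrite Hnet; exact: In_app_insert.
  right; case: src H => // j; rewrite /= /upd; case: eqP => [->|_] //.
- move=> j; exact: (proj1 (HS _)).
- move=> j r x0; exact: (proj2 (HS _)).
Qed.

Lemma writer_resp_wait_inv tr g n1 n2 s wi w v resp t :
  soda_inv tr g -> g_net g = n1 ++ (Server s, Writer wi, PTagResp (OpW w) t) :: n2 ->
  w_ph (g_w g wi) = WGet w v resp ->
  soda_inv (rcons tr LTau) (g_set_net (g_set_w g wi (w_set (w_cnt (g_w g wi)) (WGet w v (add_resp s t resp))
                                   (w_out (g_w g wi)) (g_w g wi))) (n1 ++ n2)).
Proof.
move=> I Hnet Hph; have [HT [_ [HFR [HW [_ [_ HM]]]]]] := I.
have Hin : in_transit g (Server s) (Writer wi) (PTagResp (OpW w) t).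
  left; rewrite Hnet; apply: List.in_or_app; right; by left.
have Hs : s < n by case: (HM _ _ _ Hin) => H _; exact: H.
have [W1 [W2 W3]] := HW wi; rewrite Hph in W3.
move: W3 => [A1 [A2 [A3 [A4 [A5 [A6 A7]]]]]].
apply: (writer_step_inv I) => //.
- by left.
- move=> x H; rewrite Hnet; exact: In_app_insert.
- by move=> d q H; left.
- exact: trace_inv_silent.
- by move=> o t0 /(completed_with_silent (l := LTau) isT) H; left.
- move=> pre x post w0 o1 t1 Ed Hinv Hw0 Hd.
  case: (decomp_rcons Ed) => [[_ [Ex _]]|[post' [_ Etr]]]; first by subst x.
  have [F1 F2] := HFR _ _ _ _ _ _ Etr Hinv Hd; split.
  + move=> t2 v2 /In_rcons_tau H; apply: F1; exact: H.
  + rewrite /= /upd Hw0 eqxx /= => v0' resp0 [E1 E2 E3]; subst w0 v0' resp0.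
    have Hph' : w_ph (g_w g w.1) = WGet w v resp by rewrite A1.
    have [Q [Q1 [Q2 Q3]]] := F2 v resp Hph'.
    exists Q; split => //; split.
    * apply: resps_above_add => //; exact: Q3 Hin.
    * move=> s0 d t0 /(in_transit_writer_step Hnet) H; exact: Q3 H.
- rewrite /writer_inv /= /upd eqxx /=; split; [|split].
  + move=> c v0' /In_rcons_tau H; apply: W1; exact: H.
  + move=> c t0 v0' /In_rcons_tau H; have [B1 [B2|B2]] := W2 c t0 v0' (H ltac:(discriminate)); split => //.
    * by move: B2 => [acks]; rewrite Hph.
    * by right; exact: In_rcons_l.
  + do 2 (split => //); split; first exact: In_rcons_l.
    split; first by move=> t0 v' /In_rcons_tau H; apply: (A4 t0 v'); exact: H.
    split; first exact: add_resp_uniq.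
    split; first exact: add_resp_all.
    move=> pre post v' Ed; case: (decomp_rcons Ed) => [[_ [Ex _]]|[post' [_ Etr]]] //.
    move=> c t0 vv /In_rcons_tau H; exact: A7 pre post' v' Etr c t0 vv (H ltac:(discriminate)).
Qed.

Lemma tag_lt_succ (a m : Defs.tag) x : tag_le a m -> tag_lt a (m.1.+1, x).
Proof. case: a m => [a1 a2] [m1 m2]; rewrite /tag_le /tag_lt /= xpair_eqE. lia. Qed.

Lemma trace_inv_put tr w tw v :
  trace_inv tr -> (forall t v', ~ List.In (LPut w t v') tr) -> tw.2 = w.1 -> 0 < tw.1 ->
  (forall w' v', ~ List.In (LPut w' tw v') tr) -> trace_inv (rcons tr (LPut w tw v)).
Proof.
move=> [T1 [T2 [T3 [T4 [T5 T6]]]]] Hnew Hw Hpos Hfresh.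
split; [|split; [|split; [|split; [|split]]]].
- move=> w0 t0 v0' t0' v0''; rewrite !In_rcons.
  move=> [H1|[E1 E2 E3]] [H2|[E1' E2' E3']]; subst; first exact: T1 H1 H2.
  + by case: (Hnew _ _ H1).
  + by case: (Hnew _ _ H2).
  + by [].
- move=> w0 t0 v0'; rewrite In_rcons => -[H|[-> -> _]]; [exact: T2 H | by []].
- move=> w0 w1 t0 v0' v1'; rewrite !In_rcons.
  move=> [H1|[E1 E2 E3]] [H2|[E1' E2' E3']]; subst; first exact: T3 H1 H2.
  + by case: (Hfresh _ _ H1).
  + by case: (Hfresh _ _ H2).
  + by [].
- move=> r v0' t0 v0'' t0'; rewrite !In_rcons => -[H1|//] [H2|//]; exact: T4 H1 H2.
- move=> r v0' t0; rewrite In_rcons => -[H|//].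
  case: (T5 _ _ _ H) => [H'|[w0 H']]; [by left | right; exists w0; exact: In_rcons_l].
- move=> w0; rewrite In_rcons => -[H|//].
  have [t0 [v0' H']] := T6 _ H; exists t0, v0'; exact: In_rcons_l.
Qed.

Lemma completed_with_put tr w tw v o t :
  trace_inv tr -> (forall t v', ~ List.In (LPut w t v') tr) ->
  completed_with (rcons tr (LPut w tw v)) o t -> completed_with tr o t.
Proof.
move=> [_ [_ [_ [_ [_ Hdone]]]]] Hnew; case: o => [w0|r] /=.
- move=> [H1 [v1 H2]]; rewrite In_rcons in H1; case: H1 => [H1|//]; split => //.
  exists v1; move: H2; rewrite In_rcons => -[//|[E1 E2 E3]]; subst.
  have [t2 [v2 H2]] := Hdone _ H1; case: (Hnew _ _ H2).
- by move=> [v1]; rewrite In_rcons => -[H|//]; exists v1.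
Qed.

Lemma writer_put_inv tr g n1 n2 s wi w v resp t :
  f <= (n - 1) %/ 2 -> f < n ->
  soda_inv tr g -> g_net g = n1 ++ (Server s, Writer wi, PTagResp (OpW w) t) :: n2 ->
  w_ph (g_w g wi) = WGet w v resp -> majority n (add_resp s t resp) ->
  soda_inv (rcons tr (LPut w ((max_tag (add_resp s t resp)).1.+1, wi) v))
      (g_set_net (g_set_w g wi (w_set (w_cnt (g_w g wi)) (WPut w ((max_tag (add_resp s t resp)).1.+1, wi) [::])
          (w_out (g_w g wi) ++ @md_value_send V C f w ((max_tag (add_resp s t resp)).1.+1, wi) v) (g_w g wi))) (n1 ++ n2)).
Proof.
move=> Hf Hfn I Hnet Hph Hmaj; have [HT [_ [HFR [HW [_ [_ HM]]]]]] := I.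
set tw := (_, wi).
have Hin : in_transit g (Server s) (Writer wi) (PTagResp (OpW w) t).
  left; rewrite Hnet; apply: List.in_or_app; right; by left.
have Hs : s < n by case: (HM _ _ _ Hin) => H _; exact: H.
have [W1 [W2 W3]] := HW wi; rewrite Hph in W3.
move: W3 => [A1 [A2 [A3 [A4 [A5 [A6 A7]]]]]].
(* The majority answering [w]'s tag query meets the quorum of every operation
   that completed before [w] was invoked. *)
have Habove pre post v' o1 t1 : tr = pre ++ LInvW w v' :: post -> completed_with pre o1 t1 -> tag_lt t1 tw.
  move=> Etr Hd; have [_ F2] := HFR _ _ _ (OpW w) _ _ Etr erefl Hd.
  have Hph' : w_ph (g_w g w.1) = WGet w v resp by rewrite A1.
  have [Q HQ0] := F2 v resp Hph'.
  apply: tag_lt_succ; exact: get_tag_bound Hf HQ0 Hin A5 A6 Hs Hmaj.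
(* Earlier puts of writer [wi] completed before [w] was invoked, so their tags are below [tw]. *)
have Hfresh w' v' : ~ List.In (LPut w' tw v') tr.
  move=> H; have [Ew' _] := (proj1 (proj2 HT)) _ _ _ H.
  case: w' H Ew' => [wi' c] H /= Ew'; subst wi'.
  have [pre0 [post0 Etr0]] := List.in_split _ _ A3.
  have := Habove _ _ _ _ _ Etr0 (A7 pre0 post0 v Etr0 c tw v' H); by rewrite tag_lt_irr.
apply: (writer_step_inv I) => //.
- by right; rewrite /= A1.
- move=> x H; rewrite Hnet; exact: In_app_insert.
- move=> d q H; case: (List.in_app_or _ _ _ H) => {}H; first by left.
  right; move/In_to_servers: H => [-> [i [-> Hi]]].
  split; first by []. split; first by move=> j [<-]; lia.
  rewrite /= In_rcons; by right.
- by apply: trace_inv_put => //; rewrite /= A1.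
- by move=> o t0 /(completed_with_put HT A4) Hd; left.
- move=> pre x post w0 o1 t1 Ed Hinv Hw0 Hd.
  case: (decomp_rcons Ed) => [[_ [Ex _]]|[post' [_ Etr]]]; first by subst x.
  have [F1 F2] := HFR _ _ _ _ _ _ Etr Hinv Hd; split.
  + move=> t2 v2; rewrite In_rcons => -[H|[E1 E2 E3]]; first exact: F1 H.
    subst w0 t2 v2; case: x Hinv Etr {Ed} => // w1 v1 /= Ew1 Etr; subst w1.
    exact: Habove Etr Hd.
  + by rewrite /= /upd Hw0 eqxx.
- rewrite /writer_inv /= /upd eqxx /=; split; [|split].
  + move=> c v0'; rewrite In_rcons => -[H|//]; exact: W1 H.
  + move=> c t0 v0'; rewrite In_rcons => -[H|[E1 E2 E3]].
    * have [B1 [B2|B2]] := W2 c t0 v0' H; split => //.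
      -- by move: B2 => [acks]; rewrite Hph.
      -- by right; exact: In_rcons_l.
    * subst w t0 v0'; split; [exact: A2 | left; by exists [::]].
  + by do 2 (split => //); split; first by exists v; rewrite In_rcons; right.
Qed.

Lemma sadd_uniq (T : eqType) (x : T) l : uniq l -> uniq (sadd x l).
Proof. rewrite /sadd; case: ifP => H U //; by rewrite rcons_uniq H U. Qed.

Lemma sadd_all (x : nat) l : x < n -> all (fun s => s < n) l -> all (fun s => s < n) (sadd x l).
Proof. rewrite /sadd; case: ifP => H Hx A //; by rewrite all_rcons Hx A. Qed.

Lemma acks_add_ok tr g n1 n2 s wi w t acks :
  soda_inv tr g -> g_net g = n1 ++ (Server s, Writer wi, PAck w) :: n2 ->
  w_ph (g_w g wi) = WPut w t acks ->
  [/\ s < n, uniq (sadd s acks), all (fun s => s < n) (sadd s acks) &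
      forall s0, s0 \in sadd s acks -> tag_le t (srv_tag g s0)].
Proof.
move=> I Hnet Hph; have [HT [_ [_ [HW [_ [_ HM]]]]]] := I.
have Hin : in_transit g (Server s) (Writer wi) (PAck w).
  left; rewrite Hnet; apply: List.in_or_app; right; by left.
have [Hs [_ [s' [t' [v' [[Es] [Hput Hle]]]]]]] := HM _ _ _ Hin; subst s'.
have Hs' : s < n by exact: Hs.
have [W1 [W2 W3]] := HW wi; rewrite Hph in W3.
move: W3 => [A1 [A2 [[v A3] [A4 [A5 A6]]]]].
have [Et _] := (proj1 HT) _ _ _ _ _ Hput A3; subst t'.
split => //; [exact: sadd_uniq | exact: sadd_all |].
move=> s0 /mem_sadd [->|/A6] //.
Qed.

Lemma writer_ack_wait_inv tr g n1 n2 s wi w t acks :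
  soda_inv tr g -> g_net g = n1 ++ (Server s, Writer wi, PAck w) :: n2 ->
  w_ph (g_w g wi) = WPut w t acks ->
  soda_inv (rcons tr LTau) (g_set_net (g_set_w g wi (w_set (w_cnt (g_w g wi)) (WPut w t (sadd s acks))
                                   (w_out (g_w g wi)) (g_w g wi))) (n1 ++ n2)).
Proof.
move=> I Hnet Hph; have [B1 B2 B3 B4] := acks_add_ok I Hnet Hph.
have [HT [_ [HFR [HW _]]]] := I.
have [W1 [W2 W3]] := HW wi; rewrite Hph in W3.
move: W3 => [A1 [A2 [[v A3] [A4 [A5 A6]]]]].
apply: (writer_step_inv I) => //.
- by left.
- move=> x H; rewrite Hnet; exact: In_app_insert.
- by move=> d q H; left.
- exact: trace_inv_silent.
- by move=> o t0 /(completed_with_silent (l := LTau) isT) H; left.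
- move=> pre x post w0 o1 t1 Ed Hinv Hw0 Hd.
  case: (decomp_rcons Ed) => [[_ [Ex _]]|[post' [_ Etr]]]; first by subst x.
  have [F1 F2] := HFR _ _ _ _ _ _ Etr Hinv Hd; split.
  + move=> t2 v2 /In_rcons_tau H; apply: F1; exact: H.
  + by rewrite /= /upd Hw0 eqxx.
- rewrite /writer_inv /= /upd eqxx /=; split; [|split].
  + move=> c v0' /In_rcons_tau H; apply: W1; exact: H.
  + move=> c t0 v0' /In_rcons_tau H; have [C1 [C2|C2]] := W2 c t0 v0' (H ltac:(discriminate)); split => //.
    * by move: C2 => [acks0]; rewrite Hph => -[-> -> _]; left; exists (sadd s acks).
    * by right; exact: In_rcons_l.
  + do 2 (split => //); split; first by exists v; exact: In_rcons_l.
    by [].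
Qed.

Lemma trace_inv_write_resp tr w :
  trace_inv tr -> (exists t v, List.In (LPut w t v) tr) -> trace_inv (rcons tr (LRespW w)).
Proof.
move=> [T1 [T2 [T3 [T4 [T5 T6]]]]] Hput.
have NI x : List.In x (rcons tr (LRespW w)) -> x <> LRespW w -> List.In x tr.
  by rewrite In_rcons => -[].
split; [|split; [|split; [|split; [|split]]]].
- move=> w0 t1 v1 t2 v2 /NI H1 /NI H2; exact: T1 (H1 ltac:(discriminate)) (H2 ltac:(discriminate)).
- move=> w0 t1 v1 /NI H; exact: T2 (H ltac:(discriminate)).
- move=> w1 w2 t1 v1 v2 /NI H1 /NI H2; exact: T3 (H1 ltac:(discriminate)) (H2 ltac:(discriminate)).
- move=> r v1 t1 v2 t2 /NI H1 /NI H2; exact: T4 (H1 ltac:(discriminate)) (H2 ltac:(discriminate)).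
- move=> r v1 t1 /NI H; case: (T5 _ _ _ (H ltac:(discriminate))) => [H'|[w0 H']].
  + by left.
  + by right; exists w0; exact: In_rcons_l.
- move=> w0; rewrite In_rcons => -[H|[->]].
  + have [t1 [v1 H']] := T6 _ H; exists t1, v1; exact: In_rcons_l.
  + by have [t1 [v1 H']] := Hput; exists t1, v1; exact: In_rcons_l.
Qed.

Lemma writer_done_inv tr g n1 n2 s wi w t acks :
  soda_inv tr g -> g_net g = n1 ++ (Server s, Writer wi, PAck w) :: n2 ->
  w_ph (g_w g wi) = WPut w t acks -> n - f <= size (sadd s acks) ->
  soda_inv (rcons tr (LRespW w)) (g_set_net (g_set_w g wi (w_set (w_cnt (g_w g wi)) WIdle
                                   (w_out (g_w g wi)) (g_w g wi))) (n1 ++ n2)).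
Proof.
move=> I Hnet Hph Hk; have [B1 B2 B3 B4] := acks_add_ok I Hnet Hph.
have [HT [_ [HFR [HW _]]]] := I.
have [W1 [W2 W3]] := HW wi; rewrite Hph in W3.
move: W3 => [A1 [A2 [[v A3] [A4 [A5 A6]]]]].
have T1 := proj1 HT.
have NI : forall x, x <> LRespW w -> List.In x (rcons tr (LRespW w)) -> List.In x tr.
  by move=> x Hx; rewrite In_rcons => -[].
apply: (writer_step_inv I) => //.
- by right; rewrite /= A1.
- move=> x H; rewrite Hnet; exact: In_app_insert.
- by move=> d q H; left.
- by apply: trace_inv_write_resp => //; exists t, v.
- move=> o t0 Hd; case: o Hd => [w0|r] /=.
  + move=> [H1 [v1 H2]]; have H2' := NI (LPut w0 t0 v1) ltac:(discriminate) H2.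
    move: H1; rewrite In_rcons => -[H1|[E1]].
    * by left; split => //; exists v1.
    * subst w0; have [Et _] := T1 _ _ _ _ _ H2' A3; subst t0.
      right; exists (sadd s acks); split => //.
  + move=> [v1 /NI H]; left; exists v1; exact: H.
- move=> pre x post w0 o1 t1 Ed Hinv Hw0 Hd.
  case: (decomp_rcons Ed) => [[_ [Ex _]]|[post' [_ Etr]]]; first by subst x.
  have [F1 F2] := HFR _ _ _ _ _ _ Etr Hinv Hd; split.
  + move=> t2 v2 /NI H; apply: F1; exact: H.
  + by rewrite /= /upd Hw0 eqxx.
- rewrite /writer_inv /= /upd eqxx /=; split; [|split].
  + move=> c v0' /NI H; apply: W1; exact: H.
  + move=> c t0 v0' /NI H; have [C1 [C2|C2]] := W2 c t0 v0' (H ltac:(discriminate)); split => //.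
    * move: C2 => [acks0]; rewrite Hph => -[E1 _ _]; right; rewrite In_rcons; by right; rewrite E1.
    * by right; exact: In_rcons_l.
  + by [].
Qed.

Lemma map_phi (L : seq (nat * C)) v :
  (forall x, List.In x L -> x.2 = Phi x.1 v) -> L = [seq (i, Phi i v) | i <- map fst L].
Proof.
elim: L => [|[i c] L IH] //= H; rewrite -IH; last by move=> x Hx; apply: H; right.
by have /= <- := H (i, c) (or_introl erefl).
Qed.

Lemma decoded_value_written tr t' (recv : seq (nat * Defs.tag * C)) (L : seq (nat * C)) :
  mds_decodes n (n - f) Phi Phiinv -> 0 < n - f ->
  trace_inv tr ->
  (forall s t c, List.In (s, t, c) recv -> s < n /\ coded_pair_ok tr s t c) ->
  decodable n f t' recv L ->
  (t' = t0 /\ Phiinv L = v0) \/ exists w, List.In (LPut w t' (Phiinv L)) tr.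
Proof.
move=> Hcode Hk [T1 [T2 [T3 _]]] Hrecv [HsL [HU HL]].
have HA : all (fun s => s < n) (map fst L).
  rewrite all_map; apply: all_In => x Hx /=.
  exact: (proj1 (Hrecv _ _ _ (HL _ Hx))).
have HS : size (map fst L) = n - f by rewrite size_map HsL /k.
have Hg : forall x, List.In x L -> coded_pair_ok tr x.1 t' x.2.
  move=> x Hx; exact: (proj2 (Hrecv _ _ _ (HL _ Hx))).
case: L HsL HU HL HA HS Hg => [|x0 L'] HsL HU HL HA HS Hg; first by rewrite /= /k in HsL; rewrite -HsL in Hk.
case: (Hg x0 (or_introl erefl)) => [[Et _]|[w [v [Hput _]]]].
- subst t'; left; split => //.
  rewrite (@map_phi (x0 :: L') v0); first exact: Hcode.
  move=> x Hx; case: (Hg x Hx) => [[_ ->]//|[w [v [Hput _]]]].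
  by have [_ ] := T2 _ _ _ Hput.
- right; exists w.
  rewrite (@map_phi (x0 :: L') v) ?Hcode //.
  move=> x Hx; case: (Hg x Hx) => [[Et _]|[w' [v' [Hput' ->]]]].
  + subst t'; by have [_ ] := T2 _ _ _ Hput.
  + have Ew := T3 _ _ _ _ _ Hput Hput'; subst w'.
    by have [_ ->] := T1 _ _ _ _ _ Hput Hput'.
Qed.

Lemma reader_resp_wait_inv tr g n1 n2 s ri r resp t :
  soda_inv tr g -> g_net g = n1 ++ (Server s, Reader ri, PTagResp (OpR r) t) :: n2 ->
  r_ph (g_r g ri) = RGet r resp ->
  soda_inv (rcons tr LTau) (g_set_net (g_set_r g ri (r_set (r_cnt (g_r g ri)) (RGet r (add_resp s t resp))
                                   (r_out (g_r g ri)) (g_r g ri))) (n1 ++ n2)).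
Proof.
move=> I Hnet Hph; have [HT [_ [HFR [_ [HR [_ HM]]]]]] := I.
have Hin : in_transit g (Server s) (Reader ri) (PTagResp (OpR r) t).
  left; rewrite Hnet; apply: List.in_or_app; right; by left.
have Hs : s < n by case: (HM _ _ _ Hin) => H _; exact: H.
have [R1 [R2 R3]] := HR ri; rewrite Hph in R3.
move: R3 => [A1 [A2 [A3 [A4 A5]]]].
apply: (reader_step_inv I) => //.
- move=> r0 H1 H2; rewrite /= /upd; case: eqP => [E0|_] //=.
  + rewrite E0 in H2; split => // resp0 [E1 _]; subst r0; exact: (H2 resp).
  + split => // trr recv ->; by exists recv.
- by left.
- move=> x H; rewrite Hnet; exact: In_app_insert.
- by move=> d q H; left.
- exact: trace_inv_silent.
- by move=> o t0 /(completed_with_silent (l := LTau) isT) H; left.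
- move=> pre x post r0 o1 t1 Ed Hinv Hr0 Hd.
  case: (decomp_rcons Ed) => [[_ [Ex _]]|[post' [_ Etr]]]; first by subst x.
  have [F1 [F2 F3]] := HFR _ _ _ _ _ _ Etr Hinv Hd; split; [|split].
  + move=> v2 t2 /In_rcons_tau H; apply: F1; exact: H.
  + rewrite /= /upd Hr0 eqxx /= => resp0 [E1 E2]; subst r0 resp0.
    have Hph' : r_ph (g_r g r.1) = RGet r resp by rewrite A1.
    have [Q [Q1 [Q2 Q3]]] := F2 resp Hph'.
    exists Q; split => //; split.
    * apply: resps_above_add => //; exact: Q3 Hin.
    * move=> s0 d t0 /(in_transit_reader_step Hnet) H; exact: Q3 H.
  + by rewrite /= /upd Hr0 eqxx.
- rewrite /reader_inv /= /upd eqxx /=; split; [|split].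
  + move=> c v0' t0 /In_rcons_tau H; apply: R1; exact: H.
  + move=> c /In_rcons_tau H; apply: R2; exact: H.
  + do 2 (split => //); split; first by move=> v0' t0 /In_rcons_tau H; apply: (A3 v0' t0); exact: H.
    split; [exact: add_resp_uniq | exact: add_resp_all].
Qed.

Lemma reader_get_data_inv tr g n1 n2 s ri r resp t :
  f <= (n - 1) %/ 2 -> f < n ->
  soda_inv tr g -> g_net g = n1 ++ (Server s, Reader ri, PTagResp (OpR r) t) :: n2 ->
  r_ph (g_r g ri) = RGet r resp -> majority n (add_resp s t resp) ->
  soda_inv (rcons tr LTau) (g_set_net (g_set_r g ri (r_set (r_cnt (g_r g ri)) (RData r (max_tag (add_resp s t resp)) [::])
         (r_out (g_r g ri) ++ @md_meta_send V C f (ReadValue r (max_tag (add_resp s t resp)))) (g_r g ri))) (n1 ++ n2)).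
Proof.
move=> Hf Hfn I Hnet Hph Hmaj; have [HT [_ [HFR [_ [HR [_ HM]]]]]] := I.
set trr := max_tag _.
have Hin : in_transit g (Server s) (Reader ri) (PTagResp (OpR r) t).
  left; rewrite Hnet; apply: List.in_or_app; right; by left.
have Hs : s < n by case: (HM _ _ _ Hin) => H _; exact: H.
have [R1 [R2 R3]] := HR ri; rewrite Hph in R3.
move: R3 => [A1 [A2 [A3 [A4 A5]]]].
apply: (reader_step_inv I) => //.
- move=> r0 H1 H2; rewrite /= /upd; case: eqP => [E0|_] //=.
  + split => // trr0 recv [E1 _ _]; subst r0; rewrite E0 in H2; case: (H2 resp Hph).
  + split => // trr0 recv ->; by exists recv.
- by left.
- move=> x H; rewrite Hnet; exact: In_app_insert.
- move=> d q H; case: (List.in_app_or _ _ _ H) => {}H; first by left.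
  right; move/In_to_servers: H => [-> [i [-> Hi]]].
  split; first by []. split; first by move=> j [<-]; lia.
  rewrite /read_value_ok /= /upd A1 eqxx /=; split => //; split; [by [] | by move=> trr0 recv E; case: E].
- exact: trace_inv_silent.
- by move=> o t0 /(completed_with_silent (l := LTau) isT) H; left.
- move=> pre x post r0 o1 t1 Ed Hinv Hr0 Hd.
  case: (decomp_rcons Ed) => [[_ [Ex _]]|[post' [_ Etr]]]; first by subst x.
  have [F1 [F2 F3]] := HFR _ _ _ _ _ _ Etr Hinv Hd; split; [|split].
  + move=> v2 t2 /In_rcons_tau H; apply: F1; exact: H.
  + by rewrite /= /upd Hr0 eqxx.
  + rewrite /= /upd Hr0 eqxx /= => trr0 recv [E1 E2 _]; subst r0 trr0.
    have Hph' : r_ph (g_r g r.1) = RGet r resp by rewrite A1.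
    have [Q HQ0] := F2 resp Hph'.
    exact: get_tag_bound Hf HQ0 Hin A4 A5 Hs Hmaj.
- rewrite /reader_inv /= /upd eqxx /=; split; [|split].
  + move=> c v0' t0 /In_rcons_tau H; apply: R1; exact: H.
  + move=> c /In_rcons_tau H; apply: R2; exact: H.
  + do 2 (split => //); split => //.
    by move=> v0' t0 /In_rcons_tau H; apply: (A3 v0' t0); exact: H.
Qed.

Lemma recv_add_ok tr g n1 n2 s ri r trr recv t c :
  soda_inv tr g -> g_net g = n1 ++ (Server s, Reader ri, PCoded r t c) :: n2 ->
  r_ph (g_r g ri) = RData r trr recv ->
  r.1 = ri /\ r.2 < r_cnt (g_r g ri) /\ (forall v t, ~ List.In (LRespR r v t) tr) /\
  forall s0 t0 c0, List.In (s0, t0, c0) (rcons recv (s, t, c)) ->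
     s0 < n /\ tag_le trr t0 /\ tag_le t0 (srv_tag g s0) /\ coded_pair_ok tr s0 t0 c0.
Proof.
move=> I Hnet Hph; have [_ [_ [_ [_ [HR [_ HM]]]]]] := I.
have Hin : in_transit g (Server s) (Reader ri) (PCoded r t c).
  left; rewrite Hnet; apply: List.in_or_app; right; by left.
have [Hs [_ [s' [[Es] [[Er] [P1 [P2 [P3 [P4 P5]]]]]]]]] := HM _ _ _ Hin; subst s'.
have [R1 [R2 R3]] := HR ri; rewrite Hph in R3.
move: R3 => [A1 [A2 [A3 A4]]].
do 3 (split => //).
move=> s0 t0 c0; rewrite In_rcons => -[H|[E1 E2 E3]]; first exact: A4 H.
subst s0 t0 c0; split; first exact: Hs.
split; last by split.
by apply: (P3 trr recv); rewrite -Er.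
Qed.

Lemma reader_data_wait_inv tr g n1 n2 s ri r trr recv t c :
  soda_inv tr g -> g_net g = n1 ++ (Server s, Reader ri, PCoded r t c) :: n2 ->
  r_ph (g_r g ri) = RData r trr recv ->
  soda_inv (rcons tr LTau) (g_set_net (g_set_r g ri (r_set (r_cnt (g_r g ri)) (RData r trr (rcons recv (s, t, c)))
                                   (r_out (g_r g ri)) (g_r g ri))) (n1 ++ n2)).
Proof.
move=> I Hnet Hph; have [A1 [A2 [A3 A4]]] := recv_add_ok I Hnet Hph.
have [HT [_ [HFR [_ [HR _]]]]] := I.
have [R1 [R2 R3]] := HR ri.
apply: (reader_step_inv I) => //.
- move=> r0 H1 H2; rewrite /= /upd; case: eqP => [E0|_] //=.
  + split => // trr0 recv0 [E1 E2 _]; subst r0 trr0; exists recv; by rewrite A1.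
  + split => // trr0 recv0 ->; by exists recv0.
- by left.
- move=> x H; rewrite Hnet; exact: In_app_insert.
- by move=> d q H; left.
- exact: trace_inv_silent.
- by move=> o t0 /(completed_with_silent (l := LTau) isT) H; left.
- move=> pre x post r0 o1 t1 Ed Hinv Hr0 Hd.
  case: (decomp_rcons Ed) => [[_ [Ex _]]|[post' [_ Etr]]]; first by subst x.
  have [F1 [F2 F3]] := HFR _ _ _ _ _ _ Etr Hinv Hd; split; [|split].
  + move=> v2 t2 /In_rcons_tau H; apply: F1; exact: H.
  + by rewrite /= /upd Hr0 eqxx.
  + rewrite /= /upd Hr0 eqxx /= => trr0 recv0 [E1 E2 _]; subst r0 trr0.
    apply: (F3 trr recv); by rewrite A1.
- rewrite /reader_inv /= /upd eqxx /=; split; [|split].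
  + move=> c0 v0' t0 /In_rcons_tau H; apply: R1; exact: H.
  + move=> c0 /In_rcons_tau H; apply: R2; exact: H.
  + do 2 (split => //); split.
    * by move=> v0' t0 /In_rcons_tau H; apply: (A3 v0' t0); exact: H.
    * move=> s0 t0 c0 /A4 [B1 [B2 [B3 B4]]]; split => //; split => //; split => //.
      exact: coded_pair_ok_mono (@In_rcons_l _ tr LTau) B4.
Qed.

Lemma decodable_quorum (g : gst) trr t' recv (L : seq (nat * C)) :
  0 < n - f -> decodable n f t' recv L ->
  (forall s t c, List.In (s, t, c) recv -> [/\ s < n, tag_le trr t & tag_le t (srv_tag g s)]) ->
  tag_le trr t' /\ tag_quorum g t' (map fst L).
Proof.
move=> Hk [HsL [HU HL]] Hrecv.
have [x0 Hx0] : exists x0, List.In x0 L.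
  have : 0 < size L by rewrite HsL /k.
  by case: (L) => [|x0 L'] //= _; exists x0; left.
split; first by have [] := Hrecv _ _ _ (HL _ Hx0).
split => //; split; first by rewrite size_map HsL.
split.
- rewrite all_map; apply: all_In => x Hx /=; by have [] := Hrecv _ _ _ (HL _ Hx).
- by move=> s0 /mem_map_fst [x [Hx <-]]; have [] := Hrecv _ _ _ (HL _ Hx).
Qed.

Lemma trace_inv_read_resp tr r v t :
  trace_inv tr -> (forall v t, ~ List.In (LRespR r v t) tr) ->
  (t = t0 /\ v = v0) \/ (exists w, List.In (LPut w t v) tr) ->
  trace_inv (rcons tr (LRespR r v t)).
Proof.
move=> [T1 [T2 [T3 [T4 [T5 T6]]]]] Hnew Hval.
have NI x : List.In x (rcons tr (LRespR r v t)) -> x <> LRespR r v t -> List.In x tr.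
  by rewrite In_rcons => -[].
split; [|split; [|split; [|split; [|split]]]].
- move=> w t1 v1 t2 v2 /NI H1 /NI H2; exact: T1 (H1 ltac:(discriminate)) (H2 ltac:(discriminate)).
- move=> w t1 v1 /NI H; exact: T2 (H ltac:(discriminate)).
- move=> w1 w2 t1 v1 v2 /NI H1 /NI H2; exact: T3 (H1 ltac:(discriminate)) (H2 ltac:(discriminate)).
- move=> r0 v1 t1 v2 t2; rewrite !In_rcons.
  move=> [H1|[E1 E2 E3]] [H2|[E1' E2' E3']]; subst; first exact: T4 H1 H2.
  + by case: (Hnew _ _ H1).
  + by case: (Hnew _ _ H2).
  + by [].
- move=> r0 v1 t1; rewrite In_rcons => -[H|[E1 E2 E3]]; subst.
  + case: (T5 _ _ _ H) => [H'|[w H']]; [by left | right; exists w; exact: In_rcons_l].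
  + case: Hval => [H|[w H]]; [by left | right; exists w; exact: In_rcons_l].
- move=> w /NI H; have [t1 [v1 H']] := T6 _ (H ltac:(discriminate)); exists t1, v1; exact: In_rcons_l.
Qed.

Lemma reader_done_inv tr g n1 n2 s ri r trr recv t c t' L :
  1 <= f <= (n - 1) %/ 2 -> mds_decodes n (n - f) Phi Phiinv ->
  soda_inv tr g -> g_net g = n1 ++ (Server s, Reader ri, PCoded r t c) :: n2 ->
  r_ph (g_r g ri) = RData r trr recv ->
  decodable n f t' (rcons recv (s, t, c)) L ->
  soda_inv (rcons tr (LRespR r (Phiinv L) t'))
      (g_set_net (g_set_r g ri (r_set (r_cnt (g_r g ri)) RIdle
          (r_out (g_r g ri) ++ @md_meta_send V C f (ReadComplete r trr)) (g_r g ri))) (n1 ++ n2)).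
Proof.
move=> Hf Hcode I Hnet Hph Hdec; have [A1 [A2 [A3 A4]]] := recv_add_ok I Hnet Hph.
have [HT [_ [HFR [_ [HR _]]]]] := I.
have [R1 [R2 R3]] := HR ri.
have Hk : 0 < n - f by lia.
set l := LRespR r (Phiinv L) t'.
have NI : forall x, x <> l -> List.In x (rcons tr l) -> List.In x tr.
  by move=> x Hx; rewrite In_rcons => -[].
have [Ht' HQL] : tag_le trr t' /\ tag_quorum g t' (map fst L).
  by apply: decodable_quorum Hk Hdec _ => s0 t0 c0 /A4 [? [? [? _]]].
apply: (reader_step_inv I) => //.
- move=> r0 H1 H2; rewrite /= /upd; case: eqP => [E0|_] //=.
  split => // trr0 recv0 ->; by exists recv0.
- by right; rewrite /= A1.
- move=> x H; rewrite Hnet; exact: In_app_insert.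
- move=> d q H; case: (List.in_app_or _ _ _ H) => {}H; first by left.
  right; move/In_to_servers: H => [-> [i [-> Hi]]].
  split; first by []. split; first by move=> j [<-]; lia.
  by [].
- apply: trace_inv_read_resp => //.
  apply: (decoded_value_written Hcode Hk HT _ Hdec) => s0 t0 c0.
  by move=> /A4 [B1 [_ [_ B4]]].
- move=> o t0 Hd; case: o Hd => [w0|r0] /=.
  + move=> [H1 [v1 H2]]; left; split; first exact: NI H1.
    by exists v1; exact: NI H2.
  + move=> [v1]; rewrite In_rcons => -[H|[E1 E2 E3]]; first by left; exists v1.
    by subst r0 v1 t0; right; exists (map fst L).
- move=> pre x post r0 o1 t1 Ed Hinv Hr0 Hd.
  case: (decomp_rcons Ed) => [[_ [Ex _]]|[post' [_ Etr]]]; first by subst x.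
  have [F1 [F2 F3]] := HFR _ _ _ _ _ _ Etr Hinv Hd; split; [|split].
  + move=> v2 t2; rewrite In_rcons => -[H|[E1 E2 E3]]; first exact: F1 H.
    subst r0 v2 t2; apply: tag_le_trans Ht'; apply: (F3 trr recv); by rewrite A1.
  + by rewrite /= /upd Hr0 eqxx.
  + by rewrite /= /upd Hr0 eqxx.
- rewrite /reader_inv /= /upd eqxx /=; split; [|split].
  + move=> c0 v0' t0; rewrite In_rcons => -[H|[E1 E2 E3]]; first exact: R1 H.
    by subst r; exact: A2.
  + move=> c0 /NI H; apply: R2; exact: H.
  + by [].
Qed.

Lemma writer_inv_invoke tr g wi v out :
  writer_inv tr g wi -> w_ph (g_w g wi) = WIdle ->
  let w := (wi, w_cnt (g_w g wi)) in
  writer_inv (rcons tr (LInvW w v))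
    (g_set_w g wi (w_set (w_cnt (g_w g wi)).+1 (WGet w v [::]) out (g_w g wi))) wi.
Proof.
move=> [W1 [W2 _]] Hph w.
have NI x : x <> LInvW w v -> List.In x (rcons tr (LInvW w v)) -> List.In x tr.
  by move=> Hx; rewrite In_rcons => -[].
have NoPut t v' : ~ List.In (LPut w t v') tr.
  by move=> H; have [H1 _] := W2 _ _ _ H; rewrite ltnn in H1.
have Resp c t vv : List.In (LPut (wi, c) t vv) tr -> List.In (LRespW (wi, c)) tr.
  by move=> H; have [_ [[acks]|//]] := W2 _ _ _ H; rewrite Hph.
rewrite /writer_inv /= /upd eqxx /=; split; [|split].
- move=> c v'; rewrite In_rcons => -[H|E]; first exact: leq_trans (W1 _ _ H) (leqnSn _).
  by case: E => -> _.
- move=> c t0 v'' /NI H; have H' := H ltac:(discriminate); split.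
  + exact: ltn_trans (proj1 (W2 _ _ _ H')) (ltnSn _).
  + right; apply: In_rcons_l; exact: Resp H'.
- split => //; split => //; split; first by rewrite In_rcons; right.
  split; first by move=> t v' /NI H; exact: NoPut (H ltac:(discriminate)).
  split => //; split => //.
  move=> pre post v' Ed; case: (decomp_rcons Ed) => [[Epre _]|[post' [_ Etr]]].
  + subst pre; move=> c t vv /NI H; have H' := H ltac:(discriminate).
    split; [exact: Resp H' | by exists vv].
  + have Hx : List.In (LInvW w v') tr by rewrite Etr; apply: List.in_or_app; right; left.
    have := W1 _ _ Hx; by rewrite ltnn.
Qed.

Lemma reader_inv_invoke tr g ri out :
  reader_inv tr g ri -> r_ph (g_r g ri) = RIdle ->
  let r := (ri, r_cnt (g_r g ri)) in
  reader_inv (rcons tr (LInvR r))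
    (g_set_r g ri (r_set (r_cnt (g_r g ri)).+1 (RGet r [::]) out (g_r g ri))) ri.
Proof.
move=> [R1 [R2 _]] Hph r.
have NI x : x <> LInvR r -> List.In x (rcons tr (LInvR r)) -> List.In x tr.
  by move=> Hx; rewrite In_rcons => -[].
rewrite /reader_inv /= /upd eqxx /=; split; [|split].
- move=> c v' t0 /NI H; exact: ltn_trans (R1 _ _ _ (H ltac:(discriminate))) (ltnSn _).
- move=> c; rewrite In_rcons => -[H|[<-]] //.
  exact: ltn_trans (R2 _ H) (ltnSn _).
- do 3 (split => //).
  by move=> v' t0 /NI H; have := R1 _ _ _ (H ltac:(discriminate)); rewrite ltnn.
Qed.

Lemma invoke_write_inv tr g wi v :
  soda_inv tr g -> w_ph (g_w g wi) = WIdle ->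
  let w := (wi, w_cnt (g_w g wi)) in
  soda_inv (rcons tr (LInvW w v))
    (g_set_w g wi (w_set (w_cnt (g_w g wi)).+1 (WGet w v [::])
       (w_out (g_w g wi) ++ to_servers 0 n (PTagQuery (OpW w))) (g_w g wi))).
Proof.
move=> I Hph w; have [HT [HQ [HFR [HW [_ [_ HM]]]]]] := I.
have [W1 [W2 _]] := HW wi.
set st' := w_set _ _ _ _.
change (soda_inv (rcons tr (LInvW w v)) (g_set_net (g_set_w g wi st') (g_net g))).
set l := LInvW w v.
have NI : forall x, x <> l -> List.In x (rcons tr l) -> List.In x tr.
  by move=> x Hx; rewrite In_rcons => -[].
have NoPut : forall t v', ~ List.In (LPut w t v') tr.
  move=> t v' H; have [H1 _] := W2 _ _ _ H; by rewrite ltnn in H1.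
apply: (writer_step_inv I) => //.
- by right; rewrite /= eqxx.
- move=> d q H; case: (List.in_app_or _ _ _ H) => {}H; first by left.
  right; move/In_to_servers: H => [-> [i [-> Hi]]].
  split; first by []. split; first by move=> j [<-]; lia.
  by rewrite /op_invoked /= /upd eqxx /=.
- exact: trace_inv_silent.
- by move=> o t0 /(completed_with_silent (l := l) isT) H; left.
- move=> pre x post w0 o1 t1 Ed Hinv Hw0 Hd.
  case: (decomp_rcons Ed) => [[Epre [Ex _]]|[post' [_ Etr]]].
  + subst x pre; move: Hinv => /= Ew0; subst w0.
    have [Q HQ0] := HQ _ _ Hd.
    split.
    * move=> t2 v2 /NI H; case: (NoPut t2 v2 (H ltac:(discriminate))).
    * rewrite /= /upd eqxx /= => v' resp [_ <-]; exists Q; split => //; split => //.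
      move=> s0 d t0 Hin _.
      have Hin' : in_transit g (Server s0) d (PTagResp (OpW w) t0) by case: Hin => H; [left|right].
      have [_ [_ Hf']] := HM _ _ _ Hin'; by rewrite /= ltnn in Hf'.
  + have [F1 F2] := HFR _ _ _ _ _ _ Etr Hinv Hd.
    have Hx : List.In x tr by rewrite Etr; apply: List.in_or_app; right; left.
    case: x Hinv Hx {Ed Etr} => // w1 v1 /= Ew1 Hx; subst w1.
    have Hx' : List.In (LInvW (wi, w0.2) v1) tr by rewrite -Hw0 -surjective_pairing.
    have Hlt' := W1 _ _ Hx'.
    split.
    * move=> t2 v2 /NI H; exact: F1 (H ltac:(discriminate)).
    * rewrite /= /upd Hw0 eqxx /= => v' resp [Ew]; by rewrite -Ew /= ltnn in Hlt'.
- exact: writer_inv_invoke.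
Qed.

Lemma invoke_read_inv tr g ri :
  soda_inv tr g -> r_ph (g_r g ri) = RIdle ->
  let r := (ri, r_cnt (g_r g ri)) in
  soda_inv (rcons tr (LInvR r))
    (g_set_r g ri (r_set (r_cnt (g_r g ri)).+1 (RGet r [::])
       (r_out (g_r g ri) ++ to_servers 0 n (PTagQuery (OpR r))) (g_r g ri))).
Proof.
move=> I Hph r; have [HT [HQ [HFR [_ [HR [_ HM]]]]]] := I.
have [R1 [R2 _]] := HR ri.
set st' := r_set _ _ _ _.
change (soda_inv (rcons tr (LInvR r)) (g_set_net (g_set_r g ri st') (g_net g))).
set l := LInvR r.
have NI : forall x, x <> l -> List.In x (rcons tr l) -> List.In x tr.
  by move=> x Hx; rewrite In_rcons => -[].
have NoResp : forall v t, ~ List.In (LRespR r v t) tr.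
  move=> v t H; have := R1 _ _ _ H; by rewrite ltnn.
apply: (reader_step_inv I) => //.
- move=> r0 H1 H2; rewrite /= /upd; case: eqP => [E0|_] //=.
  + split => // resp0 [Er0]; subst r0; by rewrite /= ltnn in H1.
  + split => // trr0 recv0 ->; by exists recv0.
- by right; rewrite /= eqxx.
- move=> d q H; case: (List.in_app_or _ _ _ H) => {}H; first by left.
  right; move/In_to_servers: H => [-> [i [-> Hi]]].
  split; first by []. split; first by move=> j [<-]; lia.
  by rewrite /op_invoked /= /upd eqxx /=.
- exact: trace_inv_silent.
- by move=> o t0 /(completed_with_silent (l := l) isT) H; left.
- move=> pre x post r0 o1 t1 Ed Hinv Hr0 Hd.
  case: (decomp_rcons Ed) => [[Epre [Ex _]]|[post' [_ Etr]]].
  + subst x pre; move: Hinv => /= Er0; subst r0.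
    have [Q HQ0] := HQ _ _ Hd.
    split; [|split].
    * move=> v2 t2 /NI H; case: (NoResp v2 t2 (H ltac:(discriminate))).
    * rewrite /= /upd eqxx /= => resp [<-]; exists Q; split => //; split => //.
      move=> s0 d t0 Hin _.
      have Hin' : in_transit g (Server s0) d (PTagResp (OpR r) t0) by case: Hin => H; [left|right].
      have [_ [_ Hf']] := HM _ _ _ Hin'; by rewrite /= ltnn in Hf'.
    * by rewrite /= /upd eqxx.
  + have [F1 [F2 F3]] := HFR _ _ _ _ _ _ Etr Hinv Hd.
    have Hx : List.In x tr by rewrite Etr; apply: List.in_or_app; right; left.
    case: x Hinv Hx {Ed Etr} => // r1 /= Er1 Hx; subst r1.
    have Hx' : List.In (LInvR (ri, r0.2)) tr by rewrite -Hr0 -surjective_pairing.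
    have Hlt' := R2 _ Hx'.
    split; [|split].
    * move=> v2 t2 /NI H; exact: F1 (H ltac:(discriminate)).
    * rewrite /= /upd Hr0 eqxx /= => resp [Er]; by rewrite -Er /= ltnn in Hlt'.
    * by rewrite /= /upd Hr0 eqxx.
- exact: reader_inv_invoke.
Qed.

Lemma soda_inv_step tr g l g' :
  1 <= f <= (n - 1) %/ 2 -> mds_decodes n (n - f) Phi Phiinv ->
  soda_inv tr g -> step n f Phi Phiinv g l g' -> soda_inv (rcons tr l) g'.
Proof.
move=> Hf Hcode I HS.
have [Hf1 Hf2] : f <= (n - 1) %/ 2 /\ f < n by lia.
move: I; case: HS.
- move=> g0 wi v _ Hph w I; exact: invoke_write_inv.
- move=> g0 ri _ Hph r I; exact: invoke_read_inv.
- move=> g0 s dst p rest _ Hout I; exact: send_server_inv.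
- move=> g0 wi dst p rest _ Hout I; exact: send_writer_inv.
- move=> g0 ri dst p rest _ Hout I; exact: send_reader_inv.
- move=> g0 n1 n2 src s p st' Hnet _ HR I; exact: (recv_server_inv Hf2 I Hnet HR).
- move=> g0 n1 n2 s wi p l0 st' Hnet _ HR I.
  move: HR; move E: (g_w g0 wi) => st HR.
  case: HR Hnet E.
  + move=> w v resp t st0 Hph _ Hnet E; subst st0; exact: (writer_resp_wait_inv I Hnet Hph).
  + move=> w v resp t st0 Hph Hmaj tw Hnet E; subst st0; exact: (writer_put_inv Hf1 Hf2 I Hnet Hph Hmaj).
  + move=> o t st0 _ Hnet E; subst st0; exact: (writer_ignore_inv wi I Hnet).
  + move=> w t acks st0 Hph _ Hnet E; subst st0; exact: (writer_ack_wait_inv I Hnet Hph).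
  + move=> w t acks st0 Hph Hk Hnet E; subst st0; exact: (writer_done_inv I Hnet Hph Hk).
  + move=> w st0 _ Hnet E; subst st0; exact: (writer_ignore_inv wi I Hnet).
- move=> g0 n1 n2 s ri p l0 st' Hnet _ HR I.
  move: HR; move E: (g_r g0 ri) => st HR.
  case: HR Hnet E.
  + move=> r resp t st0 Hph _ Hnet E; subst st0; exact: (reader_resp_wait_inv I Hnet Hph).
  + move=> r resp t st0 Hph Hmaj trr Hnet E; subst st0; exact: (reader_get_data_inv Hf1 Hf2 I Hnet Hph Hmaj).
  + move=> o t st0 _ Hnet E; subst st0; exact: (reader_ignore_inv ri I Hnet).
  + move=> r trr recv t c st0 Hph _ Hnet E; subst st0; exact: (reader_data_wait_inv I Hnet Hph).
  + move=> r trr recv t c st0 t' L Hph Hdec Hnet E; subst st0; exact: (reader_done_inv Hf Hcode I Hnet Hph Hdec).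
  + move=> r t c st0 _ Hnet E; subst st0; exact: (reader_ignore_inv ri I Hnet).
- move=> g0 s _ _ _ I; exact: crash_server_inv.
- move=> g0 wi I; exact: crash_writer_inv.
- move=> g0 ri I; exact: crash_reader_inv.
Qed.

Lemma reachable_soda_inv tr g :
  1 <= f <= (n - 1) %/ 2 -> mds_decodes n (n - f) Phi Phiinv ->
  reachable n f v0 Phi Phiinv tr g -> soda_inv tr g.
Proof.
move=> Hf Hcode; elim => [|tr0 g0 l g1 _ IH HS]; first exact: soda_inv_init.
exact: soda_inv_step HS.
Qed.

Lemma reachable_take tr g m :
  reachable n f v0 Phi Phiinv tr g -> exists g', reachable n f v0 Phi Phiinv (take m tr) g'.
Proof.
move=> HR; elim: HR m => [|tr0 g0 l g1 HR IH HS] m.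
- by exists (init v0 Phi); constructor.
- rewrite -cats1 take_cat; case: ifP => _; first exact: IH.
  case: (m - size tr0) => [|m'] /=.
  + rewrite cats0; have [g2 H2] := IH (size tr0); rewrite take_size in H2; by exists g2.
  + rewrite cats1; exists g1; exact: ReachS HR HS.
Qed.

(** * Atomicity *)

Lemma trace_inv_P2 tr : trace_inv tr -> P2 tr.
Proof.
move=> [_ [_ [Hwtag _]]] o1 t1 v1 o2 t2 v2 Ht1 Ht2 Hw Hne.
case: o1 Ht1 Hw Hne => [w1|r1] //= Ht1 _ Hne.
case: (tag_total t1 t2) => [H|[Et|H]]; [by left; left | subst t2 | by right; left].
case: o2 Ht2 Hne => [w2|r2] /= Ht2 Hne; last by left; right.
by case: Hne; rewrite (Hwtag _ _ _ _ _ Ht1 Ht2).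
Qed.

Lemma trace_inv_P3 tr : trace_inv tr -> P3 v0 tr.
Proof.
move=> [_ [Hpos [Hwtag [_ [Hread _]]]]] r t v /= Ht; split.
- move=> Hno; case: (Hread _ _ _ Ht) => [[_ ->]//|[w Hw]].
  by case: Hno; exists w, t, v; split => //; right.
- move=> [w [tw [vw [Hw Hp]]]].
  case: (Hread _ _ _ Ht) => [[Et _]|[w0 Hw0]].
  + have [_ Htw] := Hpos _ _ _ Hw; subst t.
    by case: Hp => [|[Et _]]; [rewrite /tag_lt /t0 /=; lia | rewrite Et /t0 in Htw].
  + exists w0, t, v; split => //; split; first by right.
    split => // w' tw' vw' Hw' [H|[Et _]]; first by right; left.
    by left; subst tw'; exact: Hwtag Hw' Hw0.
Qed.

Lemma reachable_completed_with tr g m o t v (l : lab) :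
  1 <= f <= (n - 1) %/ 2 -> mds_decodes n (n - f) Phi Phiinv ->
  reachable n f v0 Phi Phiinv tr g -> Defs.tagged tr o t v ->
  List.In l (take m tr) -> is_resp o l -> completed_with (take m tr) o t.
Proof.
move=> Hf Hcode Hexec Ht Hl Hresp.
(* The invariant of the prefix places the put of a completed write before its response. *)
have [g' Hexec'] := reachable_take m Hexec.
have [[Hwuniq [_ [_ [Hruniq [_ Hdone]]]]] _] := reachable_soda_inv Hf Hcode Hexec.
have [[_ [_ [_ [_ [_ Hdone']]]]] _] := reachable_soda_inv Hf Hcode Hexec'.
have Htake x : List.In x (take m tr) -> List.In x tr.
  by rewrite -{2}(cat_take_drop m tr); exact: In_app_l.
case: o Ht Hresp => [w|r] /= Ht.
- case: l Hl => // w' Hl Ew; subst w'.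
  have [t' [v' Hput]] := Hdone' _ Hl.
  have [Et _] := Hwuniq _ _ _ _ _ (Htake _ Hput) Ht; subst t'.
  by split => //; exists v'.
- case: l Hl => // r' v' t' Hl Er; subst r'.
  by have [_ <-] := Hruniq _ _ _ _ _ (Htake _ Hl) Ht; exists v'.
Qed.

Lemma reachable_P1 tr g :
  1 <= f <= (n - 1) %/ 2 -> mds_decodes n (n - f) Phi Phiinv ->
  reachable n f v0 Phi Phiinv tr g -> P1 tr.
Proof.
move=> Hf Hcode Hexec o1 t1 v1 o2 t2 v2 Ht1 Ht2 [i [j [l1 [l2 [Hij [Hi [Hr1 [Hj Hinv]]]]]]]].
have [_ [_ [Hafter _]]] := reachable_soda_inv Hf Hcode Hexec.
have Hdone := reachable_completed_with (m := j) Hf Hcode Hexec Ht1 (nth_error_In_take Hij Hi) Hr1.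
have := Hafter _ _ _ _ _ _ (nth_error_split Hj) Hinv Hdone.
case: o2 Ht2 Hinv => [w|r] /= Ht2 _ [Hbound _] [Hlt|[Et [_ Hrd]]] //.
- exact: tag_le_lt_false (tag_lt_le (Hbound _ _ Ht2)) Hlt.
- by move: (Hbound _ _ Ht2); rewrite Et tag_lt_irr.
- exact: tag_le_lt_false (Hbound _ _ Ht2) Hlt.
Qed.

End SodaInvariant.

Theorem theorem4 (V C : Type) (n f : nat) (v0 : V) (Phi : nat -> V -> C)
    (Phiinv : seq (nat * C) -> V)
    (Hf : 1 <= f <= (n - 1) %/ 2)
    (Hcode : mds_decodes n (n - f) Phi Phiinv)
    (tr : seq (label V)) (g : gstate V C)
    (Hexec : reachable n f v0 Phi Phiinv tr g) :
  P1 tr /\ P2 tr /\ P3 v0 tr.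
Proof.
split; last split.
- exact: reachable_P1 Hf Hcode Hexec.
- exact: trace_inv_P2 (proj1 (reachable_soda_inv Hf Hcode Hexec)).
- exact: trace_inv_P3 (proj1 (reachable_soda_inv Hf Hcode Hexec)).
Qed.
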